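(* Assume the setting, the majorant assumptions and the constants described in the context. Let $x_0\in C\cap B(x_*,\sigma)\setminus\{x_*\}$ and $\{\theta_k\}\subset[0,\lambda^2/2]$. Let $\{M_k\}$, $\{(s_k,r_k,y_k)\}$ and $\{x_k\}$ be generated by the INL-CondG method started at $x_0$ with parameters $\{\theta_k\}$ (assume the method does not stop, i.e. $F(x_k)\neq 0$ for all $k$). Assume that for all $k\ge 0$ $$\|M_k^{-1}F'(x_k)\|\le \omega_1,\qquad \|M_k^{-1}F'(x_k)-I\|\le\omega_2,$$ and that there are invertible matrices $P_k$ and scalars $\eta_k$ with $$\|P_kr_k\|\le \eta_k\|P_kF(x_k)\|,\qquad 0\le \eta_k\,\mathrm{cond}(P_kF'(x_k))\le\vartheta .$$ Then $\{x_k\}\subset B(x_*,\sigma)\cap C$, $x_k\to x_*$, and $$\|x_{k+1}-x_*\|<\|x_k-x_*\|\ \ (k\ge0),\qquad \limsup_{k\to\infty}\frac{\|x_{k+1}-x_*\|}{\|x_k-x_*\|}\le \omega_1\big[(1+\vartheta)\sqrt{2\tilde\theta}+\vartheta\big]+\omega_2,$$ where $\tilde\theta=\limsup_{k\to\infty}\theta_k$. Moreover, if additionally for some $0<p\le1$ the following condition holds: (h3) the function $(0,\nu)\ni t\mapsto [f(t)/f'(t)-t]/t^{p+1}$ is strictly increasing, then for every integer $k\ge0$ $$\|x_{k+1}-x_*\|\le \omega_1(1+\vartheta)(1+\lambda)\Big(\frac{f(\|x_0-x_*\|)}{f'(\|x_0-x_*\|)}-\|x_0-x_*\|\Big)\B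ig(\frac{\|x_k-x_*\|}{\|x_0-x_*\|}\Big)^{p+1}+\big(\omega_1[(1+\vartheta)\lambda+\vartheta]+\omega_2\big)\|x_k-x_*\|.$$
   Context: Setting: $\Omega\subset\mathbb{R}^n$ is open, $F:\Omega\to\mathbb{R}^n$ is continuously differentiable with Jacobian $F'(x)$, $C\subset\Omega$ is a nonempty convex compact set, and $x_*\in C$ satisfies $F(x_* )=0$ with $F'(x_* )$ nonsingular. $\|\cdot\|$ is the Euclidean norm on $\mathbb{R}^n$ and the induced operator norm on matrices; $B(a,\delta)$ is the open ball of center $a$ and radius $\delta$; $\mathrm{cond}(A)=\|A^{-1}\|\|A\|$. Majorant assumptions: $R>0$, $\kappa:=\sup\{t\in[0,R): B(x_*,t)\subset\Omega\}$, and $f:[0,R)\to\mathbb{R}$ is continuously differentiable with $$\|F'(x_* )^{-1}[F'(x)-F'(x_*+\tau(x-x_* ))]\|\le f'(\|x-x_*\|)-f'(\tau\|x-x_*\|)\quad\text{for all }\tau\in[0,1],\ x\in B(x_*,\kappa),$$ (h1) $f(0)=0$, $f'(0)=-1$; (h2) $f'$ is strictly increasing. Constants: $0\le\vartheta<1$, $0\le\omega_2<\omega_1$, $\omega_1\vartheta+\omega_2<1$, $\lambda\in[0,(1-\omega_2-\omega_1\vartheta)/(\omega_1(1+\vartheta)))$; $\nu:=\sup\{t\in[0,R): f'(t)<0\}$; $\rho:=\sup\{\delta\in(0,\nu): \omega_1(1+\vartheta)(1+\lambda)\big(\tfrac{f(t)}{tf'(t)}-1\big)+\omega_1[(1+\vartheta)\lambda+\vartheta]+\omega_2<1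 \text{ for all } t\in(0,\delta)\}$; $\sigma:=\min\{\kappa,\rho\}$. CondG procedure $z=\mathrm{CondG}(y,x,\varepsilon)$ (for $y\in\mathbb{R}^n$, $x\in C$, $\varepsilon\ge0$): set $z_1=x$, $t=1$. (P1) Compute an optimal solution $u_t$ of $g_t^*=\min_{u\in C}\langle z_t-y,u-z_t\rangle$. (P2) If $g_t^*\ge-\varepsilon$, set $z=z_t$ and stop; otherwise set $\alpha_t=\min\{1,-g_t^*/\|u_t-z_t\|^2\}$, $z_{t+1}=z_t+\alpha_t(u_t-z_t)$, $t\leftarrow t+1$ and go to (P1). INL-CondG method: given $x_0\in C$ and $\{\theta_j\}\subset[0,\infty)$, for $k=0,1,\dots$: if $F(x_k)=0$ stop; otherwise choose an invertible matrix $M_k$ (approximating $F'(x_k)$) and compute $(s_k,r_k,y_k)$ with $M_ks_k=-F(x_k)+r_k$, $y_k=x_k+s_k$; then set $x_{k+1}=\mathrm{CondG}(y_k,x_k,\theta_k\|s_k\|^2)$. *)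

(* classical reals.  Vectors of R^n are represented as
   functions nat -> R of which only the coordinates 0..n-1 matter;
   n x n matrices as functions nat -> nat -> R (entries (i,j), i,j < n). *)
From Stdlib Require Import Reals Lra ClassicalEpsilon.
Open Scope R_scope.

Definition vec := nat -> R.
Definition mat := nat -> nat -> R.

Fixpoint rsum (n : nat) (f : nat -> R) : R :=
  match n with O => 0 | S m => rsum m f + f m end.

Definition vzero : vec := fun _ => 0.
Definition vadd (x y : vec) : vec := fun i => x i + y i.
Definition vsub (x y : vec) : vec := fun i => x i - y i.
Definition vopp (x : vec) : vec := fun i => - x i.
Definition vscal (a : R) (x : vec) : vec := fun i => a * x i.
Definition vdot (n : nat) (x y : vec) : R := rsum n (fun i => x i * y i).
Definition vnorm (n : nat) (x : vec) : R := sqrt (vdot n x x).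
Definition veq (n : nat) (x y : vec) : Prop := forall i, (i < n)%nat -> x i = y i.

Definition mv (n : nat) (A : mat) (x : vec) : vec :=
  fun i => rsum n (fun j => A i j * x j).
Definition mm (n : nat) (A B : mat) : mat :=
  fun i k => rsum n (fun j => A i j * B j k).
Definition msub (A B : mat) : mat := fun i j => A i j - B i j.
Definition idm : mat := fun i j => if Nat.eqb i j then 1 else 0.
Definition meq (n : nat) (A B : mat) : Prop :=
  forall i j, (i < n)%nat -> (j < n)%nat -> A i j = B i j.
Definition is_inverse (n : nat) (A B : mat) : Prop :=
  meq n (mm n A B) idm /\ meq n (mm n B A) idm.
Definition invertible (n : nat) (A : mat) : Prop := exists B, is_inverse n A B.
(* A^{-1} (meaningful when A is invertible) *)
Definition mat_inv (n : nat) (A : mat) : mat :=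
  epsilon (inhabits idm) (fun B => is_inverse n A B).

(* supremum of a set of reals (meaningful when it is nonempty and bounded above) *)
Definition Rsup (E : R -> Prop) : R := epsilon (inhabits 0) (fun m => is_lub E m).

Definition opnorm (n : nat) (A : mat) : R :=
  Rsup (fun c => exists x, vnorm n x <= 1 /\ c = vnorm n (mv n A x)).
Definition cond (n : nat) (A : mat) : R := opnorm n (mat_inv n A) * opnorm n A.

Definition ball (n : nat) (a : vec) (d : R) : vec -> Prop :=
  fun x => vnorm n (vsub x a) < d.

Definition is_open (n : nat) (Om : vec -> Prop) : Prop :=
  forall x, Om x -> exists r, r > 0 /\ forall z, ball n x r z -> Om z.
Definition is_convex (C : vec -> Prop) : Prop :=
  forall x z t, C x -> C z -> 0 <= t <= 1 -> C (vadd x (vscal t (vsub z x))).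
Definition is_compact (n : nat) (C : vec -> Prop) : Prop :=
  forall u : nat -> vec, (forall k, C (u k)) ->
    exists (phi : nat -> nat) (l : vec),
      (forall k, (phi k < phi (S k))%nat) /\ C l /\
      Un_cv (fun k => vnorm n (vsub (u (phi k)) l)) 0.

Definition C1_map (n : nat) (Om : vec -> Prop) (F : vec -> vec) (DF : vec -> mat) : Prop :=
  (forall x, Om x -> forall e, e > 0 -> exists d, d > 0 /\
     forall h, vnorm n h < d -> Om (vadd x h) ->
       vnorm n (vsub (vsub (F (vadd x h)) (F x)) (mv n (DF x) h)) <= e * vnorm n h) /\
  (forall x, Om x -> forall e, e > 0 -> exists d, d > 0 /\
     forall z, Om z -> vnorm n (vsub z x) < d -> opnorm n (msub (DF z) (DF x)) < e).

Definition C1_interval (f df : R -> R) (a b : R) : Prop :=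
  (forall t, a <= t < b -> forall e, e > 0 -> exists d, d > 0 /\
     forall s, a <= s < b -> Rabs (s - t) < d ->
       Rabs (f s - f t - df t * (s - t)) <= e * Rabs (s - t)) /\
  (forall t, a <= t < b -> forall e, e > 0 -> exists d, d > 0 /\
     forall s, a <= s < b -> Rabs (s - t) < d -> Rabs (df s - df t) < e).

Definition kappa (n : nat) (Om : vec -> Prop) (xs : vec) (Rr : R) : R :=
  Rsup (fun t => 0 <= t < Rr /\ forall z, ball n xs t z -> Om z).
Definition nu (df : R -> R) (Rr : R) : R :=
  Rsup (fun t => 0 <= t < Rr /\ df t < 0).
Definition rho (f df : R -> R) (Rr w1 w2 th lam : R) : R :=
  Rsup (fun d => 0 < d < nu df Rr /\
     forall t, 0 < t < d ->
       w1 * (1 + th) * (1 + lam) * (f t / (t * df t) - 1)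
       + w1 * ((1 + th) * lam + th) + w2 < 1).

(* CondG procedure: z = CondG(y, x, eps) (any choice of optimal u_t) *)
Definition CondG (n : nat) (C : vec -> Prop) (y x : vec) (eps : R) (z : vec) : Prop :=
  exists (T : nat) (zs us : nat -> vec),
    zs O = x /\ zs T = z /\
    (forall t, (t <= T)%nat ->
       C (us t) /\
       forall u, C u ->
         vdot n (vsub (zs t) y) (vsub (us t) (zs t)) <= vdot n (vsub (zs t) y) (vsub u (zs t))) /\
    (forall t, (t < T)%nat ->
       vdot n (vsub (zs t) y) (vsub (us t) (zs t)) < - eps /\
       zs (S t) = vadd (zs t)
         (vscal (Rmin 1 (- vdot n (vsub (zs t) y) (vsub (us t) (zs t))
                          / (vnorm n (vsub (us t) (zs t)))^2))
                (vsub (us t) (zs t)))) /\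
    vdot n (vsub (zs T) y) (vsub (us T) (zs T)) >= - eps.

Definition INL_CondG (n : nat) (C : vec -> Prop) (F : vec -> vec) (x0 : vec)
    (theta : nat -> R) (M : nat -> mat) (s r y x : nat -> vec) : Prop :=
  x O = x0 /\
  forall k,
    ~ veq n (F (x k)) vzero /\
    invertible n (M k) /\
    veq n (mv n (M k) (s k)) (vadd (vopp (F (x k))) (r k)) /\
    y k = vadd (x k) (s k) /\
    CondG n C (y k) (x k) (theta k * (vnorm n (s k))^2) (x (S k)).

Definition is_limsup (u : nat -> R) (l : R) : Prop :=
  forall e, e > 0 ->
    (exists N, forall k, (N <= k)%nat -> u k <= l + e) /\
    (forall N, exists k, (N <= k)%nat /\ l - e <= u k).

(* Integrating the majorant condition along the segment from xs to x (a mean value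
   inequality) bounds the linearization error |F'(xs)^-1 (F x - F xs - F'(x) (x - xs))| by
   t f'(t) - f(t), t = |x - xs|, so the exact Newton correction at x lands within
   f(t)/f'(t) - t of xs.  The residual r, the approximate Jacobian M and the tolerance of the
   CondG projection perturb this by the terms in w1, w2, th and sqrt(theta_k), which gives the
   scalar recursion
     t_{k+1} <= w1 (1+th) (1+lam) (f(t_k)/f'(t_k) - t_k) + (w1 ((1+th) lam + th) + w2) t_k.
   Its gain is < 1 on (0, rho) by the very definition of rho, and the conclusions are
   statements about this recursion. *)

From Stdlib Require Import Reals Lra Lia ClassicalEpsilon Classical FunctionalExtensionality.
From mathcomp Require all_boot all_algebra.
From mathcomp Require Rstruct.

(* Transfer to MathComp matrices, only to get that an injective square matrix is invertible. *)
Module ToMathcomp.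
Import ssreflect ssrfun ssrbool eqtype ssrnat seq choice fintype bigop ssralg matrix.
Import GRing.Theory Rstruct.
Local Open Scope ring_scope.

Section Transfer.
Variable n : nat.

Definition Mx (A : mat) : 'M[R]_n := \matrix_(i, j) A i j.
Definition cv (x : vec) : 'cV[R]_n := \col_i x i.
Definition of_mx (B : 'M[R]_n) : mat := fun i j =>
  match insub i, insub j with Some i', Some j' => B i' j' | _, _ => 0 end.

Lemma rsum_big m (f : nat -> R) : rsum m f = \sum_(i < m) f i.
Proof. by elim: m => [|m IH]; rewrite ?big_ord0 // big_ord_recr /= IH. Qed.

Lemma Mx_mv A x : Mx A *m cv x = cv (mv n A x).
Proof.
apply/matrixP => i j; rewrite !mxE /mv rsum_big.
by apply: eq_bigr => k _; rewrite !mxE.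
Qed.

Lemma Mx_mm A B : Mx A *m Mx B = Mx (mm n A B).
Proof.
apply/matrixP => i j; rewrite !mxE /mm rsum_big.
by apply: eq_bigr => k _; rewrite !mxE.
Qed.

Lemma Mx_of_mx B : Mx (of_mx B) = B.
Proof. by apply/matrixP => i j; rewrite mxE /of_mx !valK. Qed.

Lemma Mx_idm : Mx idm = 1%:M.
Proof.
apply/matrixP => i j; rewrite !mxE /idm.
case: (eqVneq i j) => [->|ne]; first by rewrite Nat.eqb_refl.
have : nat_of_ord i <> nat_of_ord j by move=> h; move/eqP: ne; apply; apply: ord_inj.
by move/Nat.eqb_neq => ->.
Qed.

Lemma meq_of_Mx A B : Mx A = Mx B -> meq n A B.
Proof.
move=> h i j hi hj.
have := congr1 (fun M : 'M[R]_n => M (Ordinal (introT ltP hi)) (Ordinal (introT ltP hj))) h.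
by rewrite /= !mxE.
Qed.

Lemma veq_of_cv x y : cv x = cv y -> veq n x y.
Proof.
move=> h i hi.
have := congr1 (fun M : 'cV[R]_n => M (Ordinal (introT ltP hi)) ord0) h.
by rewrite /= !mxE.
Qed.

Lemma invertible_of_injective (A : mat) :
  (forall x, veq n (mv n A x) vzero -> veq n x vzero) -> invertible n A.
Proof.
move=> hinj.
have hu : Mx A \in unitmx.
  rewrite -unitmx_tr unitmxE unitfE; apply/negP => /det0P [v vn0 hv].
  pose x : vec := fun j => if insub j is Some j' then v ord0 j' else 0.
  have hcx : cv x = v^T by apply/matrixP => i j; rewrite !mxE /x valK (ord1 j).
  have h0 : cv (mv n A x) = cv vzero.
    rewrite -Mx_mv hcx -(trmxK (Mx A)) -trmx_mul hv.
    by apply/matrixP => i j; rewrite !mxE.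
  have hx := hinj x (veq_of_cv _ _ h0).
  move/eqP: vn0; apply; apply/matrixP => i j.
  by rewrite (ord1 i) mxE; have := hx j (elimT ltP (ltn_ord j)); rewrite /x valK.
exists (of_mx (invmx (Mx A))); split; apply: meq_of_Mx;
  by rewrite -Mx_mm Mx_of_mx Mx_idm ?mulmxV ?mulVmx.
Qed.
End Transfer.
End ToMathcomp.

Open Scope R_scope.

(** * Finite sums, vectors and matrices *)

Section FiniteSums.

Lemma rsum_ext m f g : (forall i, (i < m)%nat -> f i = g i) -> rsum m f = rsum m g.
Proof.
induction m as [|m IH]; intros H; simpl; [reflexivity|].
rewrite IH by (intros; apply H; lia). rewrite (H m) by lia. reflexivity.
Qed.

Lemma rsum_plus m f g : rsum m (fun i => f i + g i) = rsum m f + rsum m g.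
Proof. induction m as [|m IH]; simpl; [lra|]. rewrite IH. ring. Qed.

Lemma rsum_minus m f g : rsum m (fun i => f i - g i) = rsum m f - rsum m g.
Proof. induction m as [|m IH]; simpl; [lra|]. rewrite IH. ring. Qed.

Lemma rsum_scal m c f : rsum m (fun i => c * f i) = c * rsum m f.
Proof. induction m as [|m IH]; simpl; [lra|]. rewrite IH. ring. Qed.

Lemma rsum_zero m : rsum m (fun _ => 0) = 0.
Proof. induction m as [|m IH]; simpl; [lra|]. rewrite IH. ring. Qed.

Lemma rsum_le m f g : (forall i, (i < m)%nat -> f i <= g i) -> rsum m f <= rsum m g.
Proof.
induction m as [|m IH]; intros H; simpl; [lra|].
assert (rsum m f <= rsum m g) by (apply IH; intros; apply H; lia).
assert (f m <= g m) by (apply H; lia). lra.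
Qed.

Lemma rsum_ge0 m f : (forall i, (i < m)%nat -> 0 <= f i) -> 0 <= rsum m f.
Proof. intros H. rewrite <- (rsum_zero m). apply rsum_le. exact H. Qed.

Lemma rsum_swap m p (a : nat -> nat -> R) :
  rsum m (fun i => rsum p (fun j => a i j)) = rsum p (fun j => rsum m (fun i => a i j)).
Proof.
induction m as [|m IH]; simpl.
- symmetry. apply rsum_zero.
- rewrite IH, <- rsum_plus. reflexivity.
Qed.

Lemma rsum_eq0_nonneg m f : (forall i, (i < m)%nat -> 0 <= f i) -> rsum m f = 0 ->
  forall i, (i < m)%nat -> f i = 0.
Proof.
induction m as [|m IH]; intros H0 H i Hi; [lia|]. simpl in H.
assert (0 <= rsum m f) by (apply rsum_ge0; intros; apply H0; lia).
assert (0 <= f m) by (apply H0; lia).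
destruct (Nat.eq_dec i m) as [->|ne]; [lra|].
apply IH; try lia; try lra. intros; apply H0; lia.
Qed.

Lemma cauchy_schwarz_step S A B a b : S * S <= A * B -> 0 <= A -> 0 <= B ->
  (S + a * b) * (S + a * b) <= (A + a * a) * (B + b * b).
Proof.
intros H HA HB.
(* 2 S a b <= A b^2 + B a^2, since (2 S a b)^2 <= 4 A B (a b)^2 <= (A b^2 + B a^2)^2 *)
assert (Hsq : (2 * S * a * b) * (2 * S * a * b)
              <= (A * (b*b) + B * (a*a)) * (A * (b*b) + B * (a*a))).
{ assert (0 <= (a*b)*(a*b)) by nra.
  assert (4 * (S*S) * ((a*b)*(a*b)) <= 4 * (A*B) * ((a*b)*(a*b)))
    by (apply Rmult_le_compat_r; lra).
  assert (0 <= (A*(b*b) - B*(a*a)) * (A*(b*b) - B*(a*a))) by apply Rle_0_sqr.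
  nra. }
assert (0 <= A * (b*b) + B * (a*a)) by (apply Rplus_le_le_0_compat; apply Rmult_le_pos; nra).
assert (2 * S * a * b <= A * (b*b) + B * (a*a)).
{ destruct (Rle_or_lt (2 * S * a * b) 0); [lra|nra]. }
nra.
Qed.

Lemma rsum_cauchy_schwarz m a b :
  rsum m (fun i => a i * b i) * rsum m (fun i => a i * b i)
  <= rsum m (fun i => a i * a i) * rsum m (fun i => b i * b i).
Proof.
induction m as [|m IH]; simpl; [lra|].
apply cauchy_schwarz_step; auto; apply rsum_ge0; intros; nra.
Qed.

End FiniteSums.

Section Vectors.
Variable n : nat.

Lemma vdot_ge0 x : 0 <= vdot n x x.
Proof. apply rsum_ge0; intros; nra. Qed.

Lemma vnorm_ge0 x : 0 <= vnorm n x.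
Proof. apply sqrt_pos. Qed.

Lemma vnorm_sq x : vnorm n x * vnorm n x = vdot n x x.
Proof. apply sqrt_sqrt, vdot_ge0. Qed.

Lemma vdot_sym x y : vdot n x y = vdot n y x.
Proof. apply rsum_ext; intros; ring. Qed.

Lemma vdot_cauchy_schwarz x y : Rabs (vdot n x y) <= vnorm n x * vnorm n y.
Proof.
pose proof (rsum_cauchy_schwarz n x y) as H. fold (vdot n x y) in H.
change (rsum n (fun i => x i * x i)) with (vdot n x x) in H.
change (rsum n (fun i => y i * y i)) with (vdot n y y) in H.
rewrite <- !vnorm_sq in H.
pose proof (vnorm_ge0 x). pose proof (vnorm_ge0 y).
assert (0 <= vnorm n x * vnorm n y) by nra.
unfold Rabs; destruct (Rcase_abs (vdot n x y)); nra.
Qed.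

Lemma vdot_le x y : vdot n x y <= vnorm n x * vnorm n y.
Proof. pose proof (vdot_cauchy_schwarz x y). pose proof (Rle_abs (vdot n x y)). lra. Qed.

Lemma vdot_opp_le x y : - vdot n x y <= vnorm n x * vnorm n y.
Proof.
pose proof (vdot_cauchy_schwarz x y). pose proof (Rle_abs (- vdot n x y)).
rewrite Rabs_Ropp in *. lra.
Qed.

Lemma vdot_add_l x y z : vdot n (vadd x y) z = vdot n x z + vdot n y z.
Proof. unfold vdot, vadd. rewrite <- rsum_plus. apply rsum_ext; intros; ring. Qed.

Lemma vdot_add_r x y z : vdot n z (vadd x y) = vdot n z x + vdot n z y.
Proof. unfold vdot, vadd. rewrite <- rsum_plus. apply rsum_ext; intros; ring. Qed.

Lemma vdot_sub_r x y z : vdot n z (vsub x y) = vdot n z x - vdot n z y.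
Proof. unfold vdot, vsub. rewrite <- rsum_minus. apply rsum_ext; intros; ring. Qed.

Lemma vdot_scal_r c x y : vdot n x (vscal c y) = c * vdot n x y.
Proof. unfold vdot, vscal. rewrite <- rsum_scal. apply rsum_ext; intros; ring. Qed.

Lemma vdot_vzero_l x : vdot n vzero x = 0.
Proof. unfold vdot, vzero. transitivity (rsum n (fun _ => 0)); [apply rsum_ext; intros; ring|apply rsum_zero]. Qed.

Lemma vdot_veq x x' y y' : veq n x x' -> veq n y y' -> vdot n x y = vdot n x' y'.
Proof. intros H1 H2. apply rsum_ext; intros i Hi. rewrite H1, H2 by exact Hi. reflexivity. Qed.

Lemma vnorm_veq x y : veq n x y -> vnorm n x = vnorm n y.
Proof. intros H. unfold vnorm. rewrite (vdot_veq x y x y H H). reflexivity. Qed.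

Lemma vnorm_le_of_sq x c : 0 <= c -> vdot n x x <= c * c -> vnorm n x <= c.
Proof. intros Hc H. rewrite <- vnorm_sq in H. pose proof (vnorm_ge0 x). nra. Qed.

Lemma vnorm_add x y : vnorm n (vadd x y) <= vnorm n x + vnorm n y.
Proof.
pose proof (vnorm_ge0 x). pose proof (vnorm_ge0 y).
apply vnorm_le_of_sq; [lra|].
rewrite vdot_add_l, !vdot_add_r, (vdot_sym y x).
pose proof (vdot_le x y). rewrite <- !vnorm_sq. nra.
Qed.

Lemma vnorm_scal c x : vnorm n (vscal c x) = Rabs c * vnorm n x.
Proof.
unfold vnorm. replace (vdot n (vscal c x) (vscal c x)) with (Rsqr c * vdot n x x).
- rewrite sqrt_mult, sqrt_Rsqr_abs by (apply Rle_0_sqr || apply vdot_ge0). reflexivity.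
- unfold vdot, vscal, Rsqr. rewrite <- rsum_scal. apply rsum_ext; intros; ring.
Qed.

Lemma vnorm_opp x : vnorm n (vopp x) = vnorm n x.
Proof.
replace (vopp x) with (vscal (-1) x).
- rewrite vnorm_scal, Rabs_left by lra. ring.
- apply functional_extensionality; intro i; unfold vopp, vscal; ring.
Qed.

Lemma vnorm_sub x y : vnorm n (vsub x y) <= vnorm n x + vnorm n y.
Proof.
replace (vsub x y) with (vadd x (vopp y)).
- rewrite <- (vnorm_opp y). apply vnorm_add.
- apply functional_extensionality; intro i; unfold vopp, vsub, vadd; ring.
Qed.

Lemma vnorm_eq0 x : vnorm n x = 0 -> veq n x vzero.
Proof.
intros H i Hi. unfold vzero.
assert (vdot n x x = 0) by (rewrite <- vnorm_sq, H; ring).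
assert (x i * x i = 0)
  by (apply (rsum_eq0_nonneg n (fun i => x i * x i)); auto; intros; nra).
nra.
Qed.

Lemma vnorm_vzero : vnorm n vzero = 0.
Proof. unfold vnorm. rewrite vdot_vzero_l. apply sqrt_0. Qed.

End Vectors.

Section Matrices.
Variable n : nat.

Lemma mv_veq A x y : veq n x y -> mv n A x = mv n A y.
Proof.
intros H. apply functional_extensionality; intro i.
apply rsum_ext; intros j Hj. rewrite H; auto.
Qed.

Lemma mv_sub A x y : mv n A (vsub x y) = vsub (mv n A x) (mv n A y).
Proof.
apply functional_extensionality; intro i. unfold mv, vsub.
rewrite <- rsum_minus. apply rsum_ext; intros; ring.
Qed.

Lemma mv_scal A c x : mv n A (vscal c x) = vscal c (mv n A x).
Proof.
apply functional_extensionality; intro i. unfold mv, vscal.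
rewrite <- rsum_scal. apply rsum_ext; intros; ring.
Qed.

Lemma mv_msub A B x : mv n (msub A B) x = vsub (mv n A x) (mv n B x).
Proof.
apply functional_extensionality; intro i. unfold mv, msub, vsub.
rewrite <- rsum_minus. apply rsum_ext; intros; ring.
Qed.

Lemma mv_mm A B x : mv n (mm n A B) x = mv n A (mv n B x).
Proof.
apply functional_extensionality; intro i. unfold mv, mm.
transitivity (rsum n (fun j => rsum n (fun l => A i l * B l j * x j))).
- apply rsum_ext; intros. rewrite Rmult_comm, <- rsum_scal. apply rsum_ext; intros; ring.
- rewrite rsum_swap. apply rsum_ext; intros. rewrite <- rsum_scal. apply rsum_ext; intros; ring.
Qed.

Lemma mv_vzero A : veq n (mv n A vzero) vzero.
Proof.
intros i Hi. unfold mv, vzero. transitivity (rsum n (fun _ => 0)); [apply rsum_ext; intros; ring|apply rsum_zero].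
Qed.

Lemma mv_meq A B x : meq n A B -> veq n (mv n A x) (mv n B x).
Proof. intros H i Hi. apply rsum_ext; intros j Hj. rewrite H; auto. Qed.

Lemma mv_idm x : veq n (mv n idm x) x.
Proof.
intros i Hi. unfold mv, idm.
assert (Hm : forall m, rsum m (fun j => (if Nat.eqb i j then 1 else 0) * x j)
                      = if Nat.ltb i m then x i else 0).
{ induction m as [|m IH]; simpl; [reflexivity|]. rewrite IH.
  destruct (Nat.eqb_spec i m) as [->|ne].
  - rewrite (proj2 (Nat.ltb_ge m m)), (proj2 (Nat.ltb_lt m (S m))) by lia. ring.
  - destruct (Nat.ltb_spec i m); destruct (Nat.ltb_spec i (S m)); try lia; ring. }
rewrite Hm, (proj2 (Nat.ltb_lt i n)) by exact Hi. reflexivity.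
Qed.

Lemma mv_inverse_r A B x : is_inverse n A B -> veq n (mv n A (mv n B x)) x.
Proof.
intros [H _] i Hi. rewrite <- mv_mm, (mv_meq _ _ x H i Hi). apply mv_idm; auto.
Qed.

Lemma mv_inverse_l A B x : is_inverse n A B -> veq n (mv n B (mv n A x)) x.
Proof.
intros [_ H] i Hi. rewrite <- mv_mm, (mv_meq _ _ x H i Hi). apply mv_idm; auto.
Qed.

Lemma mat_inv_spec A : invertible n A -> is_inverse n A (mat_inv n A).
Proof. intros H. unfold mat_inv. apply epsilon_spec. exact H. Qed.

Lemma inverse_injective A B v : is_inverse n A B -> veq n (mv n A v) vzero -> veq n v vzero.
Proof.
intros HAB Hv i Hi. rewrite <- (mv_inverse_l A B v HAB i Hi), (mv_veq B _ _ Hv).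
apply mv_vzero; auto.
Qed.

Lemma invertible_mm A B : invertible n A -> invertible n B -> invertible n (mm n A B).
Proof.
intros [Ai HA] [Bi HB]. apply ToMathcomp.invertible_of_injective. intros v Hv.
apply (inverse_injective B Bi v HB), (inverse_injective A Ai _ HA).
rewrite <- mv_mm. exact Hv.
Qed.

End Matrices.

(** * Suprema, operator norms and one-sided derivatives *)

Lemma Rabs_le_between a b : Rabs a <= b -> -b <= a <= b.
Proof. unfold Rabs; destruct (Rcase_abs a); lra. Qed.

Lemma Rmult_frac_succ_le a b : 0 <= a -> 0 <= b -> b * (a / (a + 1)) <= b.
Proof.
intros Ha Hb. rewrite <- (Rmult_1_r b) at 2. apply Rmult_le_compat_l; [exact Hb|].
apply (Rmult_le_reg_r (a + 1)); [lra|]. unfold Rdiv. rewrite Rmult_assoc, Rinv_l; lra.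
Qed.

Lemma Rsup_lub E : (exists x, E x) -> (exists M, forall x, E x -> x <= M) -> is_lub E (Rsup E).
Proof.
intros Hne Hb. unfold Rsup. apply epsilon_spec.
destruct (completeness E Hb Hne) as [m Hm]. exists m; exact Hm.
Qed.

Lemma is_lub_approx E m t : is_lub E m -> t < m -> exists s, E s /\ t < s.
Proof.
intros [_ Hleast] Ht. apply NNPP. intros Hno.
assert (m <= t) by (apply Hleast; intros s Hs; apply Rnot_lt_le; intro; apply Hno; eauto).
lra.
Qed.

Lemma opnorm_lub n A :
  is_lub (fun c => exists x, vnorm n x <= 1 /\ c = vnorm n (mv n A x)) (opnorm n A).
Proof.
apply Rsup_lub.
- exists (vnorm n (mv n A vzero)), vzero. rewrite vnorm_vzero. split; [lra|reflexivity].
- (* the Frobenius norm bounds the operator norm *)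
  set (S := rsum n (fun i => rsum n (fun j => A i j * A i j))).
  assert (HS : 0 <= S) by (apply rsum_ge0; intros; apply rsum_ge0; intros; nra).
  exists (sqrt S). intros c [x [Hx ->]].
  assert (Hx' : vdot n x x <= 1) by (rewrite <- vnorm_sq; pose proof (vnorm_ge0 n x); nra).
  unfold vnorm. apply sqrt_le_1_alt.
  apply (Rle_trans _ (S * vdot n x x)); [|nra].
  unfold S. rewrite Rmult_comm, <- rsum_scal. apply rsum_le. intros i Hi.
  pose proof (rsum_cauchy_schwarz n (fun j => A i j) x) as Hc. unfold vdot, mv. lra.
Qed.

Lemma opnorm_ge0 n A : 0 <= opnorm n A.
Proof.
destruct (opnorm_lub n A) as [H _]. apply (Rle_trans _ (vnorm n (mv n A vzero))).
- apply vnorm_ge0.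
- apply H. exists vzero. rewrite vnorm_vzero. split; [lra|reflexivity].
Qed.

Lemma opnorm_bound n A x : vnorm n (mv n A x) <= opnorm n A * vnorm n x.
Proof.
destruct (opnorm_lub n A) as [H _]. pose proof (vnorm_ge0 n x).
destruct (Req_dec (vnorm n x) 0) as [Hx0|Hx0].
- rewrite Hx0, Rmult_0_r, (vnorm_veq n _ vzero), vnorm_vzero; [lra|].
  intros i Hi. rewrite (mv_veq n A x vzero (vnorm_eq0 n x Hx0)). apply mv_vzero; auto.
- set (c := / vnorm n x). assert (Hc : 0 < c) by (apply Rinv_0_lt_compat; lra).
  assert (Hle : c * vnorm n (mv n A x) <= opnorm n A).
  { apply H. exists (vscal c x).
    rewrite vnorm_scal, mv_scal, vnorm_scal, Rabs_right by lra.
    unfold c. rewrite Rinv_l by lra. split; [lra|reflexivity]. }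
  apply (Rmult_le_compat_l (vnorm n x)) in Hle; [|lra].
  unfold c in Hle. rewrite <- Rmult_assoc, Rinv_r, Rmult_1_l in Hle by lra. lra.
Qed.

Lemma opnorm_le_bound n A w x : opnorm n A <= w -> vnorm n (mv n A x) <= w * vnorm n x.
Proof.
intros H. apply (Rle_trans _ _ _ (opnorm_bound n A x)).
apply Rmult_le_compat_r; [apply vnorm_ge0|exact H].
Qed.

Lemma real_induction01 (P : R -> Prop) :
  P 0 ->
  (forall c, 0 < c <= 1 -> (forall r, 0 <= r < c -> P r) -> P c) ->
  (forall c, 0 <= c < 1 -> P c -> exists d, d > 0 /\ forall r, c < r < c + d -> P r) ->
  P 1.
Proof.
intros H0 Hleft Hright.
set (E := fun s => 0 <= s <= 1 /\ forall r, 0 <= r <= s -> P r).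
assert (Hlub : is_lub E (Rsup E)).
{ apply Rsup_lub.
  - exists 0. split; [lra|]. intros r Hr. replace r with 0 by lra. exact H0.
  - exists 1. intros s [Hs _]. lra. }
set (c := Rsup E) in *.
assert (Hc : 0 <= c <= 1).
{ destruct Hlub as [Hub Hleast]. split.
  - apply Hub. split; [lra|]. intros r Hr. replace r with 0 by lra. exact H0.
  - apply Hleast. intros s [Hs _]. lra. }
assert (Hbelow : forall r, 0 <= r < c -> P r).
{ intros r Hr. destruct (is_lub_approx E c r Hlub ltac:(lra)) as [s [[_ Hs] Hrs]].
  apply Hs. lra. }
assert (Hat : P c).
{ destruct (Req_dec c 0) as [->|Hc0]; [exact H0|]. apply Hleft; [lra|exact Hbelow]. }
destruct (Req_dec c 1) as [<-|Hc1]; [exact Hat|].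
destruct (Hright c ltac:(lra) Hat) as [d [Hd Hr]].
set (s := c + Rmin d (1 - c) / 2).
assert (Hm : 0 < Rmin d (1 - c) <= d /\ Rmin d (1 - c) <= 1 - c)
  by (split; [split; [apply Rmin_glb_lt; lra|apply Rmin_l]|apply Rmin_r]).
assert (HEs : E s).
{ split; [unfold s; lra|]. intros r Hrs.
  destruct (Rlt_or_le r c) as [Hrc|Hrc]; [apply Hbelow; lra|].
  destruct (Req_dec r c) as [->|Hrc']; [exact Hat|]. apply Hr. unfold s in Hrs. lra. }
destruct Hlub as [Hub _]. specialize (Hub s HEs). unfold s in Hub. lra.
Qed.

(* The differentiability clause of [C1_interval], on an arbitrary domain [D]. *)
Definition deriv_on (D : R -> Prop) (g dg : R -> R) : Prop :=
  forall t, D t -> forall e, e > 0 -> exists d, d > 0 /\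
    forall s, D s -> Rabs (s - t) < d -> Rabs (g s - g t - dg t * (s - t)) <= e * Rabs (s - t).

Definition unit_interval (t : R) : Prop := 0 <= t <= 1.

Lemma deriv_nonpos_le psi dpsi :
  deriv_on unit_interval psi dpsi -> (forall t, unit_interval t -> dpsi t <= 0) -> psi 1 <= psi 0.
Proof.
intros Hd Hneg. apply le_epsilon. intros e He.
replace (psi 0 + e) with (psi 0 + e * 1) by ring.
apply (real_induction01 (fun r => psi r <= psi 0 + e * r)).
- lra.
- intros c Hc Hbelow.
  destruct (Hd c ltac:(split; lra) e He) as [d [Hdp Hdc]].
  set (s := c - Rmin c d / 2).
  assert (Hm : 0 < Rmin c d <= c /\ Rmin c d <= d)
    by (split; [split; [apply Rmin_glb_lt; lra|apply Rmin_l]|apply Rmin_r]).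
  assert (Habs : Rabs (s - c) = c - s) by (rewrite Rabs_left by (unfold s; lra); ring).
  specialize (Hdc s ltac:(split; unfold s; lra) ltac:(rewrite Habs; unfold s; lra)).
  rewrite Habs in Hdc. apply Rabs_le_between in Hdc.
  specialize (Hbelow s ltac:(unfold s; lra)). specialize (Hneg c ltac:(split; lra)).
  assert (dpsi c * (s - c) >= 0) by (unfold s in *; nra). lra.
- intros c Hc Hpc.
  destruct (Hd c ltac:(split; lra) e He) as [d [Hdp Hdc]].
  exists (Rmin d (1 - c)). split; [apply Rmin_glb_lt; lra|].
  intros r Hr. assert (Hm : Rmin d (1 - c) <= d /\ Rmin d (1 - c) <= 1 - c)
    by (split; [apply Rmin_l|apply Rmin_r]).
  assert (Habs : Rabs (r - c) = r - c) by (rewrite Rabs_right by lra; ring).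
  specialize (Hdc r ltac:(split; lra) ltac:(rewrite Habs; lra)).
  rewrite Habs in Hdc. apply Rabs_le_between in Hdc.
  specialize (Hneg c ltac:(split; lra)).
  assert (dpsi c * (r - c) <= 0) by nra. lra.
Qed.

Section DerivativeRules.
Variable D : R -> Prop.

Lemma deriv_on_plus g dg h dh : deriv_on D g dg -> deriv_on D h dh ->
  deriv_on D (fun t => g t + h t) (fun t => dg t + dh t).
Proof.
intros Hg Hh t Ht e He.
destruct (Hg t Ht (e / 2) ltac:(lra)) as [d1 [Hd1 H1]].
destruct (Hh t Ht (e / 2) ltac:(lra)) as [d2 [Hd2 H2]].
exists (Rmin d1 d2). split; [apply Rmin_glb_lt; lra|]. intros s Hs Hst.
assert (Rmin d1 d2 <= d1) by apply Rmin_l. assert (Rmin d1 d2 <= d2) by apply Rmin_r.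
specialize (H1 s Hs ltac:(lra)). specialize (H2 s Hs ltac:(lra)).
replace (g s + h s - (g t + h t) - (dg t + dh t) * (s - t))
  with ((g s - g t - dg t * (s - t)) + (h s - h t - dh t * (s - t))) by ring.
apply (Rle_trans _ _ _ (Rabs_triang _ _)). lra.
Qed.

Lemma deriv_on_scal c g dg : deriv_on D g dg ->
  deriv_on D (fun t => c * g t) (fun t => c * dg t).
Proof.
intros Hg t Ht e He. pose proof (Rabs_pos c) as Hc.
destruct (Hg t Ht (e / (Rabs c + 1)) ltac:(apply Rdiv_lt_0_compat; lra)) as [d [Hd H]].
exists d. split; [exact Hd|]. intros s Hs Hst. specialize (H s Hs Hst).
replace (c * g s - c * g t - c * dg t * (s - t)) with (c * (g s - g t - dg t * (s - t))) by ring.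
rewrite Rabs_mult. pose proof (Rabs_pos (s - t)) as Hst'.
apply (Rle_trans _ (Rabs c * (e / (Rabs c + 1) * Rabs (s - t)))); [apply Rmult_le_compat_l; lra|].
replace (Rabs c * (e / (Rabs c + 1) * Rabs (s - t)))
  with (e * Rabs (s - t) * (Rabs c / (Rabs c + 1))) by (field; lra).
apply Rmult_frac_succ_le; nra.
Qed.

Lemma deriv_on_linear c : deriv_on D (fun t => c * t) (fun _ => c).
Proof.
intros t _ e He. exists 1. split; [lra|]. intros s _ _.
replace (c * s - c * t - c * (s - t)) with 0 by ring. rewrite Rabs_R0.
pose proof (Rabs_pos (s - t)). nra.
Qed.

End DerivativeRules.

Lemma deriv_on_rescale (f df : R -> R) (Rr t : R) :
  deriv_on (fun u => 0 <= u < Rr) f df -> 0 <= t < Rr ->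
  deriv_on unit_interval (fun tau => f (tau * t)) (fun tau => df (tau * t) * t).
Proof.
intros Hf Ht tau Htau e He.
destruct (Hf (tau * t) ltac:(unfold unit_interval in Htau; nra) (e / (t + 1))
            ltac:(apply Rdiv_lt_0_compat; lra)) as [d [Hd H]].
exists (d / (t + 1)). split; [apply Rdiv_lt_0_compat; lra|]. intros s Hs Hst.
assert (Habs : Rabs (s * t - tau * t) = Rabs (s - tau) * t)
  by (replace (s * t - tau * t) with ((s - tau) * t) by ring; rewrite Rabs_mult, (Rabs_right t) by lra; reflexivity).
pose proof (Rabs_pos (s - tau)) as Hpos.
assert (Hlt : Rabs (s - tau) * t < d).
{ apply (Rle_lt_trans _ (Rabs (s - tau) * (t + 1))); [nra|].
  apply (Rmult_lt_reg_r (/ (t + 1))); [apply Rinv_0_lt_compat; lra|].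
  rewrite Rmult_assoc, Rinv_r by lra. unfold Rdiv in Hst. lra. }
specialize (H (s * t) ltac:(unfold unit_interval in Hs; nra) ltac:(rewrite Habs; exact Hlt)).
rewrite Habs in H.
replace (df (tau * t) * t * (s - tau)) with (df (tau * t) * (s * t - tau * t)) by ring.
apply (Rle_trans _ _ _ H).
replace (e / (t + 1) * (Rabs (s - tau) * t)) with (e * Rabs (s - tau) * (t / (t + 1))) by (field; lra).
apply Rmult_frac_succ_le; nra.
Qed.

(** * The majorant function *)

Section MajorantFunction.
Variables (f df : R -> R) (Rr : R).
Hypothesis HR : Rr > 0.
Hypothesis Hf : C1_interval f df 0 Rr.
Hypothesis Hh1 : f 0 = 0 /\ df 0 = -1.
Hypothesis Hh2 : forall a b, 0 <= a -> a < b -> b < Rr -> df a < df b.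

Lemma nu_lub : is_lub (fun t => 0 <= t < Rr /\ df t < 0) (nu df Rr).
Proof.
apply Rsup_lub.
- exists 0. split; [lra|]. destruct Hh1; lra.
- exists Rr. intros t [Ht _]; lra.
Qed.

Lemma nu_le : nu df Rr <= Rr.
Proof. destruct nu_lub as [_ H]. apply H. intros t [Ht _]; lra. Qed.

Lemma df_neg t : 0 <= t < nu df Rr -> df t < 0.
Proof.
intros Ht. destruct (is_lub_approx _ _ t nu_lub ltac:(lra)) as [s [[Hs Hds] Hts]].
assert (df t < df s) by (apply Hh2; lra). lra.
Qed.

Lemma f_le_mul_df t : 0 <= t < Rr -> f t <= t * df t.
Proof.
intros Ht.
assert (Hd : deriv_on unit_interval (fun tau => f (tau * t) + (- (t * df t)) * tau)
                                    (fun tau => df (tau * t) * t + - (t * df t))).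
{ apply deriv_on_plus; [apply (deriv_on_rescale f df Rr t); [exact (proj1 Hf)|exact Ht]|].
  apply deriv_on_linear. }
assert (Hle := deriv_nonpos_le _ _ Hd). simpl in Hle.
rewrite Rmult_0_l, Rmult_1_l, (proj1 Hh1) in Hle. apply Rle_minus in Hle; [lra|].
intros tau [H0 H1]. destruct (Req_dec (tau * t) t) as [->|Hne]; [lra|].
assert (df (tau * t) < df t) by (apply Hh2; nra). nra.
Qed.

Lemma newton_gap_nonneg t : 0 <= t < Rr -> df t < 0 -> 0 <= f t / df t - t.
Proof.
intros Ht Hneg. pose proof (f_le_mul_df t Ht).
replace (f t / df t - t) with ((t * df t - f t) / (- df t)) by (field; lra).
apply Rmult_le_pos; [lra|]. left; apply Rinv_0_lt_compat; lra.
Qed.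

Lemma newton_ratio_near0 e : e > 0 -> exists d, 0 < d <= Rr /\ forall t, 0 < t < d ->
  df t < 0 /\ f t / (t * df t) - 1 <= e.
Proof.
intros He. set (e' := Rmin (1/2) (e/4)).
assert (He' : 0 < e' <= 1/2 /\ e' <= e/4)
  by (split; [split; [apply Rmin_glb_lt; lra|apply Rmin_l]|apply Rmin_r]).
destruct Hf as [Hd Hc]. destruct Hh1 as [Hf0 Hdf0].
destruct (Hd 0 ltac:(lra) e' ltac:(lra)) as [d1 [Hd1 H1]].
destruct (Hc 0 ltac:(lra) e' ltac:(lra)) as [d2 [Hd2 H2]].
exists (Rmin Rr (Rmin d1 d2)).
assert (Hm : Rmin Rr (Rmin d1 d2) <= Rr /\ Rmin Rr (Rmin d1 d2) <= d1 /\ Rmin Rr (Rmin d1 d2) <= d2).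
{ pose proof (Rmin_l Rr (Rmin d1 d2)). pose proof (Rmin_r Rr (Rmin d1 d2)).
  pose proof (Rmin_l d1 d2). pose proof (Rmin_r d1 d2). lra. }
split; [split; [apply Rmin_glb_lt; [lra|apply Rmin_glb_lt; lra]|apply Hm]|].
intros t Ht.
assert (Habs : Rabs (t - 0) = t) by (rewrite Rminus_0_r, Rabs_right; lra).
specialize (H1 t ltac:(lra) ltac:(rewrite Habs; lra)).
specialize (H2 t ltac:(lra) ltac:(rewrite Habs; lra)).
rewrite Habs, Hf0, Hdf0 in H1. rewrite Hdf0 in H2.
apply Rabs_le_between in H1. apply Rabs_def2 in H2.
assert (Hneg : df t < 0) by lra. split; [exact Hneg|].
(* |f t - t df t| <= 2 e' t while |t df t| >= t / 2 *)
assert (Hden : t * df t < 0) by nra.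
replace (f t / (t * df t) - 1) with ((t * df t - f t) / (- (t * df t))) by (field; lra).
apply (Rmult_le_reg_r (- (t * df t))); [lra|].
unfold Rdiv. rewrite Rmult_assoc, Rinv_l by lra. nra.
Qed.

Lemma nu_pos : 0 < nu df Rr.
Proof.
destruct (newton_ratio_near0 1 ltac:(lra)) as [d [Hd H]].
destruct nu_lub as [Hub _].
apply (Rlt_le_trans _ (d / 2)); [lra|]. apply Hub. split; [lra|]. apply (H (d / 2)). lra.
Qed.

Lemma C1_interval_continuity_pt L : 0 < L < Rr -> continuity_pt f L /\ continuity_pt df L.
Proof.
intros HL. destruct Hf as [H1 H2].
assert (Hnear : forall d, d > 0 -> exists d', d' > 0 /\ d' <= d /\
          forall s, Rabs (s - L) < d' -> 0 <= s < Rr).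
{ intros d Hd. exists (Rmin d (Rmin L (Rr - L))).
  pose proof (Rmin_l d (Rmin L (Rr - L))). pose proof (Rmin_r d (Rmin L (Rr - L))).
  pose proof (Rmin_l L (Rr - L)). pose proof (Rmin_r L (Rr - L)).
  split; [apply Rmin_glb_lt; [lra|apply Rmin_glb_lt; lra]|split; [lra|]].
  intros s Hs. apply Rabs_def2 in Hs. lra. }
split; intros e He.
- set (k := Rabs (df L) + 1). assert (Hk : 0 < k) by (pose proof (Rabs_pos (df L)); unfold k; lra).
  destruct (H1 L ltac:(lra) 1 ltac:(lra)) as [d [Hd H]].
  destruct (Hnear (Rmin d (e / (k + 1))) ltac:(apply Rmin_glb_lt; [lra|apply Rdiv_lt_0_compat; lra]))
    as [d' [Hd' [Hd'd Hin]]].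
  exists d'. split; [exact Hd'|]. intros s [_ Hs]. simpl in *. unfold R_dist in *.
  pose proof (Rmin_l d (e / (k + 1))). pose proof (Rmin_r d (e / (k + 1))).
  specialize (H s (Hin s Hs) ltac:(lra)).
  assert (Hb : Rabs (f s - f L) <= k * Rabs (s - L)).
  { replace (f s - f L) with ((f s - f L - df L * (s - L)) + df L * (s - L)) by ring.
    apply (Rle_trans _ _ _ (Rabs_triang _ _)). rewrite Rabs_mult. unfold k. lra. }
  apply (Rle_lt_trans _ _ _ Hb).
  assert (Hs' : Rabs (s - L) < e / (k + 1)) by lra.
  apply (Rmult_lt_compat_l k) in Hs'; [|exact Hk].
  apply (Rlt_le_trans _ _ _ Hs').
  replace (k * (e / (k + 1))) with (e * (k / (k + 1))) by (field; lra).
  apply Rmult_frac_succ_le; lra.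
- destruct (H2 L ltac:(lra) e He) as [d [Hd H]].
  destruct (Hnear d Hd) as [d' [Hd' [Hd'd Hin]]].
  exists d'. split; [exact Hd'|]. intros s [_ Hs]. simpl in *. unfold R_dist in *.
  apply H; [apply Hin; exact Hs|lra].
Qed.

Lemma newton_gap_continuity_pt L : 0 < L < Rr -> df L < 0 ->
  continuity_pt (fun t => f t / df t - t) L.
Proof.
intros HL Hneg. destruct (C1_interval_continuity_pt L HL) as [Cf Cdf].
apply (continuity_pt_minus (fun t => f t / df t) id).
- apply (continuity_pt_div f df); auto. lra.
- apply derivable_continuous_pt, derivable_pt_id.
Qed.

Section Rho.
Variables (w1 w2 th lam : R).
Hypothesis Hth : 0 <= th < 1.
Hypothesis Hw : 0 <= w2 < w1.
Hypothesis Hlam : 0 <= lam < (1 - w2 - w1 * th) / (w1 * (1 + th)).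

Lemma linear_rate_lt1 : w1 * ((1 + th) * lam + th) + w2 < 1.
Proof.
destruct Hlam as [_ H]. assert (Hp : 0 < w1 * (1 + th)) by nra.
apply (Rmult_lt_compat_r (w1 * (1 + th))) in H; [|exact Hp].
unfold Rdiv in H. rewrite Rmult_assoc, Rinv_l in H by lra. nra.
Qed.

Definition rho_admissible d := 0 < d < nu df Rr /\
  forall t, 0 < t < d ->
    w1 * (1 + th) * (1 + lam) * (f t / (t * df t) - 1) + w1 * ((1 + th) * lam + th) + w2 < 1.

Lemma rho_lub : is_lub rho_admissible (rho f df Rr w1 w2 th lam).
Proof.
apply Rsup_lub; [|exists (nu df Rr); intros d [[_ Hd] _]; lra].
set (K := w1 * (1 + th) * (1 + lam)). set (c := w1 * ((1 + th) * lam + th) + w2).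
assert (HK : 0 < K) by (unfold K; destruct Hlam; apply Rmult_lt_0_compat; [apply Rmult_lt_0_compat|]; lra).
assert (Hc : c < 1) by apply linear_rate_lt1.
destruct (newton_ratio_near0 ((1 - c) / (2 * K))) as [d [Hd H]]; [apply Rdiv_lt_0_compat; lra|].
pose proof nu_pos as Hnu.
set (d' := Rmin d (nu df Rr)).
assert (Hd' : 0 < d' <= d /\ d' <= nu df Rr)
  by (split; [split; [apply Rmin_glb_lt; lra|apply Rmin_l]|apply Rmin_r]).
exists (d' / 2). split; [lra|].
intros t Ht. destruct (H t ltac:(lra)) as [_ Hle]. fold K c.
apply (Rmult_le_compat_l K) in Hle; [|lra].
replace (K * ((1 - c) / (2 * K))) with ((1 - c) / 2) in Hle by (field; lra).
unfold c in *. lra.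
Qed.

Lemma rho_le_nu : rho f df Rr w1 w2 th lam <= nu df Rr.
Proof. destruct rho_lub as [_ H]. apply H. intros d [[_ Hd] _]. lra. Qed.

Lemma rho_approx t : t < rho f df Rr w1 w2 th lam -> exists d, t < d /\ rho_admissible d.
Proof.
intros Ht. destruct (is_lub_approx _ _ t rho_lub Ht) as [d [Hd Htd]]. eauto.
Qed.

End Rho.
End MajorantFunction.

(** * The majorant condition *)

Lemma kappa_lub n Om xs Rr : Rr > 0 ->
  is_lub (fun t => 0 <= t < Rr /\ forall z, ball n xs t z -> Om z) (kappa n Om xs Rr).
Proof.
intros HR. apply Rsup_lub.
- exists 0. split; [lra|]. intros z Hz. unfold ball in Hz. pose proof (vnorm_ge0 n (vsub z xs)). lra.
- exists Rr. intros t [Ht _]. lra.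
Qed.

Lemma kappa_le n Om xs Rr : Rr > 0 -> kappa n Om xs Rr <= Rr.
Proof. intros HR. destruct (kappa_lub n Om xs Rr HR) as [_ H]. apply H. intros t [Ht _]. lra. Qed.

Lemma kappa_ball_sub n Om xs Rr z : Rr > 0 -> ball n xs (kappa n Om xs Rr) z -> Om z.
Proof.
intros HR Hz. destruct (is_lub_approx _ _ _ (kappa_lub n Om xs Rr HR) Hz) as [t [[_ Ht] Hlt]].
apply Ht. exact Hlt.
Qed.

Lemma deriv_on_segment n Om F DF (w p d : vec) (G : mat) :
  C1_map n Om F DF -> (forall tau, unit_interval tau -> Om (vadd p (vscal tau d))) ->
  deriv_on unit_interval (fun tau => vdot n w (mv n G (F (vadd p (vscal tau d)))))
    (fun tau => vdot n w (mv n G (mv n (DF (vadd p (vscal tau d))) d))).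
Proof.
intros [HF _] Hseg tau Htau e He.
set (X := vnorm n w * opnorm n G * vnorm n d).
assert (HX : 0 <= X)
  by (apply Rmult_le_pos; [apply Rmult_le_pos|]; (apply vnorm_ge0 || apply opnorm_ge0)).
destruct (HF _ (Hseg tau Htau) (e / (X + 1)) ltac:(apply Rdiv_lt_0_compat; lra)) as [d1 [Hd1 H]].
exists (d1 / (vnorm n d + 1)). pose proof (vnorm_ge0 n d).
split; [apply Rdiv_lt_0_compat; lra|]. intros s Hs Hst.
set (h := vscal (s - tau) d).
assert (Hseg_s : vadd (vadd p (vscal tau d)) h = vadd p (vscal s d))
  by (apply functional_extensionality; intro i; unfold h, vadd, vscal; ring).
assert (Hh : vnorm n h = Rabs (s - tau) * vnorm n d) by apply vnorm_scal.
pose proof (Rabs_pos (s - tau)) as Hpos.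
assert (Hhd : vnorm n h < d1).
{ rewrite Hh. apply (Rle_lt_trans _ (Rabs (s - tau) * (vnorm n d + 1))); [nra|].
  apply (Rmult_lt_reg_r (/ (vnorm n d + 1))); [apply Rinv_0_lt_compat; lra|].
  rewrite Rmult_assoc, Rinv_r by lra. unfold Rdiv in Hst. lra. }
specialize (H h Hhd ltac:(rewrite Hseg_s; apply Hseg; exact Hs)). rewrite Hseg_s in H.
set (err := vsub (vsub (F (vadd p (vscal s d))) (F (vadd p (vscal tau d))))
                 (mv n (DF (vadd p (vscal tau d))) h)) in H.
replace (vdot n w (mv n G (F (vadd p (vscal s d)))) - vdot n w (mv n G (F (vadd p (vscal tau d))))
         - vdot n w (mv n G (mv n (DF (vadd p (vscal tau d))) d)) * (s - tau))
  with (vdot n w (mv n G err))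
  by (unfold err, h; rewrite !mv_sub, mv_scal, !vdot_sub_r, mv_scal, vdot_scal_r; ring).
apply (Rle_trans _ _ _ (vdot_cauchy_schwarz n w _)).
apply (Rle_trans _ (vnorm n w * (opnorm n G * (e / (X + 1) * vnorm n h)))).
{ apply Rmult_le_compat_l; [apply vnorm_ge0|].
  apply (Rle_trans _ _ _ (opnorm_bound n G err)).
  apply Rmult_le_compat_l; [apply opnorm_ge0|exact H]. }
rewrite Hh.
replace (vnorm n w * (opnorm n G * (e / (X + 1) * (Rabs (s - tau) * vnorm n d))))
  with (e * Rabs (s - tau) * (X / (X + 1))) by (unfold X; field; fold X; lra).
apply Rmult_frac_succ_le; nra.
Qed.

Section MajorantCondition.
Variables (n : nat) (Om : vec -> Prop) (F : vec -> vec) (DF : vec -> mat) (xs : vec) (Rr : R)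
  (f df : R -> R).
Hypothesis HR : Rr > 0.
Hypothesis HF : C1_map n Om F DF.
Hypothesis Hf : C1_interval f df 0 Rr.
Hypothesis Hh1 : f 0 = 0 /\ df 0 = -1.
Hypothesis Hh2 : forall a b, 0 <= a -> a < b -> b < Rr -> df a < df b.
Hypothesis HDFxs : invertible n (DF xs).
Hypothesis Hmaj : forall tau z, 0 <= tau <= 1 -> ball n xs (kappa n Om xs Rr) z ->
  opnorm n (mm n (mat_inv n (DF xs)) (msub (DF z) (DF (vadd xs (vscal tau (vsub z xs))))))
  <= df (vnorm n (vsub z xs)) - df (tau * vnorm n (vsub z xs)).

Lemma majorant_linearization_dot x w K :
  ball n xs (kappa n Om xs Rr) x -> vnorm n w <= K ->
  vdot n w (mv n (mat_inv n (DF xs)) (vsub (vsub (F x) (F xs)) (mv n (DF x) (vsub x xs))))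
  <= K * (df (vnorm n (vsub x xs)) * vnorm n (vsub x xs) - f (vnorm n (vsub x xs))).
Proof.
intros Hx HwK.
set (G := mat_inv n (DF xs)). set (d := vsub x xs). set (t := vnorm n d).
assert (Ht : 0 <= t < Rr)
  by (split; [apply vnorm_ge0|pose proof (kappa_le n Om xs Rr HR); unfold t, d; unfold ball in Hx; lra]).
assert (Hseg : forall tau, unit_interval tau -> ball n xs (kappa n Om xs Rr) (vadd xs (vscal tau d))).
{ intros tau [H0 H1]. unfold ball.
  replace (vsub (vadd xs (vscal tau d)) xs) with (vscal tau d)
    by (apply functional_extensionality; intro i; unfold vsub, vadd, vscal; ring).
  rewrite vnorm_scal, Rabs_right by lra. fold t. unfold ball in Hx. fold d t in Hx. nra. }
set (a := vdot n w (mv n G (mv n (DF x) d))).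
(* the majorant condition makes this function of tau nonincreasing on [0, 1] *)
assert (Hd : deriv_on unit_interval
   (fun tau => vdot n w (mv n G (F (vadd xs (vscal tau d)))) + (- a - K * (df t * t)) * tau
               + K * f (tau * t))
   (fun tau => vdot n w (mv n G (mv n (DF (vadd xs (vscal tau d))) d)) + (- a - K * (df t * t))
               + K * (df (tau * t) * t))).
{ apply deriv_on_plus; [apply deriv_on_plus|].
  - apply (deriv_on_segment n Om F DF); [exact HF|].
    intros tau Htau. apply (kappa_ball_sub n Om xs Rr); auto.
  - apply deriv_on_linear.
  - apply deriv_on_scal, (deriv_on_rescale f df Rr t); [exact (proj1 Hf)|exact Ht]. }
apply deriv_nonpos_le in Hd.
- rewrite !Rmult_1_l, !Rmult_0_l, (proj1 Hh1) in Hd.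
  replace (vadd xs (vscal 1 d)) with x in Hd
    by (apply functional_extensionality; intro i; unfold d, vadd, vscal, vsub; ring).
  replace (vadd xs (vscal 0 d)) with xs in Hd
    by (apply functional_extensionality; intro i; unfold vadd, vscal; ring).
  rewrite !mv_sub, !vdot_sub_r. fold a. lra.
- intros tau Htau.
  set (Dt := DF (vadd xs (vscal tau d))).
  specialize (Hmaj tau x Htau Hx). fold G d t Dt in Hmaj.
  assert (Hdiff : vdot n w (mv n G (mv n Dt d)) - a
                  = - vdot n w (mv n (mm n G (msub (DF x) Dt)) d))
    by (unfold a; rewrite mv_mm, mv_msub, mv_sub, vdot_sub_r; ring).
  assert (Hbound : - vdot n w (mv n (mm n G (msub (DF x) Dt)) d) <= K * ((df t - df (tau * t)) * t)).
  { apply (Rle_trans _ _ _ (vdot_opp_le n w _)).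
    apply Rmult_le_compat; [apply vnorm_ge0|apply vnorm_ge0|exact HwK|].
    apply (Rle_trans _ _ _ (opnorm_bound n _ d)). fold t.
    apply Rmult_le_compat_r; [apply vnorm_ge0|exact Hmaj]. }
  lra.
Qed.

Lemma majorant_linearization_norm x : ball n xs (kappa n Om xs Rr) x ->
  vnorm n (mv n (mat_inv n (DF xs)) (vsub (vsub (F x) (F xs)) (mv n (DF x) (vsub x xs))))
  <= df (vnorm n (vsub x xs)) * vnorm n (vsub x xs) - f (vnorm n (vsub x xs)).
Proof.
intros Hx. set (t := vnorm n (vsub x xs)).
set (w := mv n (mat_inv n (DF xs)) (vsub (vsub (F x) (F xs)) (mv n (DF x) (vsub x xs)))).
pose proof (majorant_linearization_dot x w (vnorm n w) Hx (Rle_refl _)) as H. fold w t in H.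
rewrite <- vnorm_sq in H. pose proof (vnorm_ge0 n w).
assert (Ht : 0 <= t < Rr)
  by (split; [apply vnorm_ge0|pose proof (kappa_le n Om xs Rr HR); unfold ball in Hx; fold t in Hx; lra]).
pose proof (f_le_mul_df f df Rr Hf Hh1 Hh2 t Ht).
destruct (Req_dec (vnorm n w) 0) as [Hw0|Hw0]; [lra|].
apply (Rmult_le_reg_l (vnorm n w)); lra.
Qed.

Lemma majorant_derivative_lower x v : ball n xs (kappa n Om xs Rr) x ->
  - df (vnorm n (vsub x xs)) * vnorm n v <= vnorm n (mv n (mat_inv n (DF xs)) (mv n (DF x) v)).
Proof.
intros Hx. set (G := mat_inv n (DF xs)). set (t := vnorm n (vsub x xs)).
pose proof (Hmaj 0 x ltac:(lra) Hx) as H. fold G t in H.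
replace (vadd xs (vscal 0 (vsub x xs))) with xs in H
  by (apply functional_extensionality; intro i; unfold vadd, vscal, vsub; ring).
rewrite Rmult_0_l, (proj2 Hh1) in H.
pose proof (opnorm_le_bound n _ _ v H) as Hdiff.
rewrite mv_mm, mv_msub, mv_sub in Hdiff.
assert (Hv : vnorm n v <= vnorm n (mv n G (mv n (DF x) v))
              + vnorm n (vsub (mv n G (mv n (DF x) v)) (mv n G (mv n (DF xs) v)))).
{ rewrite <- (vnorm_veq n (vsub (mv n G (mv n (DF x) v))
                (vsub (mv n G (mv n (DF x) v)) (mv n G (mv n (DF xs) v)))) v).
  - apply vnorm_sub.
  - intros i Hi. unfold vsub.
    rewrite (mv_inverse_l n (DF xs) G v (mat_inv_spec n (DF xs) HDFxs) i Hi). ring. }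
lra.
Qed.

Lemma newton_step_error x Di : ball n xs (kappa n Om xs Rr) x -> df (vnorm n (vsub x xs)) < 0 ->
  veq n (F xs) vzero -> is_inverse n (DF x) Di ->
  vnorm n (mv n Di (vsub (F x) (mv n (DF x) (vsub x xs))))
  <= f (vnorm n (vsub x xs)) / df (vnorm n (vsub x xs)) - vnorm n (vsub x xs).
Proof.
intros Hx Hneg HFxs HDi. set (t := vnorm n (vsub x xs)) in *.
set (u := mv n Di (vsub (F x) (mv n (DF x) (vsub x xs)))).
pose proof (majorant_derivative_lower x u Hx) as H1.
pose proof (majorant_linearization_norm x Hx) as H2. fold t in H1, H2.
rewrite (mv_veq n _ _ (vsub (vsub (F x) (F xs)) (mv n (DF x) (vsub x xs)))) in H1.
- apply (Rmult_le_reg_l (- df t)); [lra|].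
  replace (- df t * (f t / df t - t)) with (df t * t - f t) by (field; lra). lra.
- intros i Hi. unfold u. rewrite (mv_inverse_r n (DF x) Di _ HDi i Hi).
  unfold vsub. rewrite (HFxs i Hi). unfold vzero. ring.
Qed.
End MajorantCondition.

(** * One step of INL-CondG *)

Lemma CondG_spec n C y x eps z : is_convex C -> C x -> 0 <= eps -> CondG n C y x eps z ->
  C z /\ forall u, C u -> vdot n (vsub z y) (vsub u z) >= - eps.
Proof.
intros Hconv Hx Heps [T [zs [us [H0 [HT [Hopt [Hstep Hstop]]]]]]].
assert (HC : forall t, (t <= T)%nat -> C (zs t)).
{ induction t as [|t IH]; intros Ht; [rewrite H0; exact Hx|].
  destruct (Hstep t ltac:(lia)) as [Hlt ->].
  apply Hconv; [apply IH; lia|apply (Hopt t ltac:(lia))|].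
  (* the step size min(1, -g/|u-z|^2) lies in [0,1], also when |u-z| = 0 *)
  set (g := vdot n (vsub (zs t) y) (vsub (us t) (zs t))) in *.
  set (q := vnorm n (vsub (us t) (zs t)) ^ 2).
  assert (Hq : 0 <= q) by (unfold q; apply pow_le, vnorm_ge0).
  assert (0 <= - g / q).
  { destruct (Req_dec q 0) as [->|Hq0]; [unfold Rdiv; rewrite Rinv_0; lra|].
    apply Rmult_le_pos; [lra|left; apply Rinv_0_lt_compat; lra]. }
  split; [apply Rmin_glb; lra|apply Rmin_l]. }
rewrite <- HT. split; [apply HC; lia|].
intros u Hu. destruct (Hopt T (le_n T)) as [_ Hmin]. specialize (Hmin u Hu). lra.
Qed.

Lemma CondG_dist n C y x eps z xs : is_convex C -> C x -> C xs -> 0 <= eps ->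
  CondG n C y x eps z -> C z /\ vnorm n (vsub z xs) <= vnorm n (vsub y xs) + sqrt eps.
Proof.
intros Hconv Hx Hxs Heps HG. destruct (CondG_spec n C y x eps z Hconv Hx Heps HG) as [Hz Hopt].
split; [exact Hz|]. specialize (Hopt xs Hxs).
set (a := vnorm n (vsub z xs)). set (b := vnorm n (vsub y xs)).
(* |z - xs|^2 = -<z - y, xs - z> + <y - xs, z - xs> <= eps + b a *)
assert (Hsq : a * a <= eps + b * a).
{ assert (Hid : vdot n (vsub z xs) (vsub z xs)
                = - vdot n (vsub z y) (vsub xs z) + vdot n (vsub y xs) (vsub z xs)).
  { unfold vdot.
    transitivity (rsum n (fun i => (-1) * (vsub z y i * vsub xs z i) + vsub y xs i * vsub z xs i)).
    - apply rsum_ext. intros; unfold vsub; ring.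
    - rewrite rsum_plus, rsum_scal. ring. }
  pose proof (vdot_le n (vsub y xs) (vsub z xs)) as Hle.
  fold a b in Hle. assert (a * a = vdot n (vsub z xs) (vsub z xs)) by apply vnorm_sq. lra. }
pose proof (sqrt_pos eps). pose proof (sqrt_sqrt eps Heps).
assert (Ha : 0 <= a) by apply vnorm_ge0. assert (Hb : 0 <= b) by apply vnorm_ge0.
apply Rnot_lt_le. intro Hlt. nra.
Qed.

Lemma invertible_of_near_identity n B D w : w < 1 ->
  opnorm n (msub (mm n B D) idm) <= w -> invertible n D.
Proof.
intros Hw H. apply ToMathcomp.invertible_of_injective. intros v Hv.
apply vnorm_eq0. pose proof (opnorm_le_bound n _ _ v H) as Hb.
rewrite (vnorm_veq n _ (vopp v)), vnorm_opp in Hb.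
- pose proof (vnorm_ge0 n v). pose proof (opnorm_ge0 n (msub (mm n B D) idm)). nra.
- intros i Hi. rewrite mv_msub, mv_mm, (mv_veq n B _ _ Hv). unfold vsub, vopp.
  rewrite (mv_vzero n B i Hi), (mv_idm n v i Hi). unfold vzero. ring.
Qed.

Lemma relative_residual_bound n P D Di r b eta th :
  invertible n P -> is_inverse n D Di ->
  vnorm n (mv n P r) <= eta * vnorm n (mv n P b) ->
  0 <= eta * cond n (mm n P D) <= th ->
  vnorm n (mv n Di r) <= th * vnorm n (mv n Di b).
Proof.
intros HP HDi Hr Heta.
set (Q := mm n P D). set (Qi := mat_inv n Q).
assert (HQi : is_inverse n Q Qi) by (apply mat_inv_spec, invertible_mm; [exact HP|exists Di; exact HDi]).
assert (Hv : vnorm n (mv n Di r) <= opnorm n Qi * vnorm n (mv n P r)).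
{ rewrite (vnorm_veq n (mv n Di r) (mv n Qi (mv n P r))); [apply opnorm_bound|].
  intros i Hi. rewrite <- (mv_inverse_l n Q Qi (mv n Di r) HQi i Hi). f_equal.
  unfold Q. rewrite mv_mm. apply mv_veq. intros j Hj. rewrite (mv_inverse_r n D Di r HDi j Hj). reflexivity. }
assert (Hb : vnorm n (mv n P b) <= opnorm n Q * vnorm n (mv n Di b)).
{ rewrite (vnorm_veq n (mv n P b) (mv n Q (mv n Di b))); [apply opnorm_bound|].
  unfold Q. rewrite mv_mm, (mv_veq n P (mv n D (mv n Di b)) b); [intros i Hi; reflexivity|].
  intros j Hj. apply (mv_inverse_r n D Di b HDi j Hj). }
unfold cond in Heta. fold Q Qi in Heta.
pose proof (opnorm_ge0 n Qi). pose proof (opnorm_ge0 n Q).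
pose proof (vnorm_ge0 n (mv n P r)). pose proof (vnorm_ge0 n (mv n P b)). pose proof (vnorm_ge0 n (mv n Di b)).
destruct (Rle_or_lt 0 eta) as [He|He].
- assert (vnorm n (mv n P r) <= eta * (opnorm n Q * vnorm n (mv n Di b)))
    by (apply (Rle_trans _ _ _ Hr), Rmult_le_compat_l; auto).
  apply (Rle_trans _ _ _ Hv).
  apply (Rle_trans _ (opnorm n Qi * (eta * (opnorm n Q * vnorm n (mv n Di b))))); [apply Rmult_le_compat_l; auto|].
  replace (opnorm n Qi * (eta * (opnorm n Q * vnorm n (mv n Di b))))
    with (eta * (opnorm n Qi * opnorm n Q) * vnorm n (mv n Di b)) by ring.
  apply Rmult_le_compat_r; lra.
- assert (vnorm n (mv n P r) <= 0) by nra. nra.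
Qed.

Lemma inexact_newton_step_bound n M D Di (Fx r s d : vec) w1 w2 th :
  invertible n M -> is_inverse n D Di ->
  veq n (mv n M s) (vadd (vopp Fx) r) ->
  opnorm n (mm n (mat_inv n M) D) <= w1 ->
  opnorm n (msub (mm n (mat_inv n M) D) idm) <= w2 ->
  vnorm n (mv n Di r) <= th * vnorm n (mv n Di Fx) -> 0 <= th ->
  vnorm n s <= w1 * (1 + th) * vnorm n (mv n Di Fx) /\
  vnorm n (vadd d s) <= w1 * (1 + th) * vnorm n (vsub (mv n Di Fx) d) + (w1 * th + w2) * vnorm n d.
Proof.
intros HM HDi Hs HA HA1 Hr Hth.
assert (Hw1 : 0 <= w1) by (pose proof (opnorm_ge0 n (mm n (mat_inv n M) D)); lra).
set (A := mm n (mat_inv n M) D) in *. set (v := mv n Di r) in *. set (e := mv n Di Fx) in *.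
set (u := vsub e d).
(* s = M^-1 (- Fx + r) = A (v - e) *)
assert (Hsv : veq n s (mv n A (vsub v e))).
{ intros i Hi. unfold A. rewrite mv_mm.
  rewrite (mv_veq n (mat_inv n M) (mv n D (vsub v e)) (mv n M s)).
  - symmetry. apply (mv_inverse_l n M _ s (mat_inv_spec n M HM) i Hi).
  - intros j Hj. rewrite (Hs j Hj), mv_sub. unfold vsub, vadd, vopp, v, e.
    rewrite (mv_inverse_r n D Di r HDi j Hj), (mv_inverse_r n D Di Fx HDi j Hj). ring. }
assert (Hds : veq n (vadd d s) (vsub (mv n A (vsub v u)) (vsub (mv n A d) d))).
{ intros i Hi. unfold vadd at 1. rewrite (Hsv i Hi).
  replace (vsub v e) with (vsub (vsub v u) d)
    by (apply functional_extensionality; intro j; unfold u, vsub; ring).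
  rewrite mv_sub. unfold vsub. ring. }
pose proof (vnorm_sub n v e). pose proof (vnorm_sub n v u). pose proof (vnorm_ge0 n u).
assert (He : vnorm n e <= vnorm n u + vnorm n d)
  by (replace e with (vadd u d) by (apply functional_extensionality; intro j; unfold u, vadd, vsub; ring);
      apply vnorm_add).
split.
- rewrite (vnorm_veq n _ _ Hsv). apply (Rle_trans _ _ _ (opnorm_le_bound n _ _ _ HA)).
  apply (Rle_trans _ (w1 * (th * vnorm n e + vnorm n e))); [apply Rmult_le_compat_l; lra|right; ring].
- rewrite (vnorm_veq n _ _ Hds). apply (Rle_trans _ _ _ (vnorm_sub n _ _)).
  pose proof (opnorm_le_bound n _ _ (vsub v u) HA).
  assert (vnorm n (vsub (mv n A d) d) <= w2 * vnorm n d).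
  { rewrite (vnorm_veq n _ (mv n (msub A idm) d)); [apply opnorm_le_bound; exact HA1|].
    intros i Hi. rewrite mv_msub. unfold vsub. rewrite (mv_idm n d i Hi). reflexivity. }
  assert (w1 * vnorm n (vsub v u) <= w1 * (th * (vnorm n u + vnorm n d) + vnorm n u))
    by (apply Rmult_le_compat_l; nra).
  nra.
Qed.

Section OneStep.
Variables (n : nat) (Om : vec -> Prop) (F : vec -> vec) (DF : vec -> mat) (C : vec -> Prop)
  (xs : vec) (Rr : R) (f df : R -> R).
Hypothesis HR : Rr > 0.
Hypothesis HF : C1_map n Om F DF.
Hypothesis Hf : C1_interval f df 0 Rr.
Hypothesis Hh1 : f 0 = 0 /\ df 0 = -1.
Hypothesis Hh2 : forall a b, 0 <= a -> a < b -> b < Rr -> df a < df b.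
Hypothesis HDFxs : invertible n (DF xs).
Hypothesis Hmaj : forall tau z, 0 <= tau <= 1 -> ball n xs (kappa n Om xs Rr) z ->
  opnorm n (mm n (mat_inv n (DF xs)) (msub (DF z) (DF (vadd xs (vscal tau (vsub z xs))))))
  <= df (vnorm n (vsub z xs)) - df (tau * vnorm n (vsub z xs)).
Hypothesis HFxs : veq n (F xs) vzero.
Hypothesis Hxs : C xs.
Hypothesis HCconv : is_convex C.

Lemma inl_condg_step (th w1 w2 : R) x M s r y z P eta theta :
  w2 < 1 ->
  ball n xs (kappa n Om xs Rr) x -> df (vnorm n (vsub x xs)) < 0 -> C x ->
  invertible n M -> veq n (mv n M s) (vadd (vopp (F x)) r) -> y = vadd x s ->
  CondG n C y x (theta * (vnorm n s)^2) z ->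
  opnorm n (mm n (mat_inv n M) (DF x)) <= w1 ->
  opnorm n (msub (mm n (mat_inv n M) (DF x)) idm) <= w2 ->
  invertible n P ->
  vnorm n (mv n P r) <= eta * vnorm n (mv n P (F x)) ->
  0 <= eta * cond n (mm n P (DF x)) <= th ->
  0 <= theta ->
  C z /\
  vnorm n (vsub z xs) <=
    w1 * (1 + th) * (f (vnorm n (vsub x xs)) / df (vnorm n (vsub x xs)) - vnorm n (vsub x xs))
    + (w1 * th + w2) * vnorm n (vsub x xs)
    + sqrt theta * (w1 * (1 + th) * (f (vnorm n (vsub x xs)) / df (vnorm n (vsub x xs)))).
Proof.
intros Hw2 Hx Hneg HCx HM Hs Hy HG HA HA1 HP Hr Heta Htheta.
set (d := vsub x xs) in *. set (t := vnorm n d) in *.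
destruct (invertible_of_near_identity n _ _ _ Hw2 HA1) as [Di HDi].
assert (Hth : 0 <= th) by lra.
pose proof (relative_residual_bound n P (DF x) Di r (F x) eta th HP HDi Hr Heta) as Hres.
destruct (inexact_newton_step_bound n M (DF x) Di (F x) r s d w1 w2 th HM HDi Hs HA HA1 Hres Hth)
  as [Hsn Hyn].
assert (Hu : vnorm n (vsub (mv n Di (F x)) d) <= f t / df t - t).
{ rewrite (vnorm_veq n _ (mv n Di (vsub (F x) (mv n (DF x) d)))).
  - apply (newton_step_error n Om F DF xs Rr f df); auto.
  - intros i Hi. rewrite mv_sub. unfold vsub. rewrite (mv_inverse_l n (DF x) Di d HDi i Hi).
    reflexivity. }
assert (He : vnorm n (mv n Di (F x)) <= f t / df t).
{ replace (mv n Di (F x)) with (vadd (vsub (mv n Di (F x)) d) d)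
    by (apply functional_extensionality; intro i; unfold vadd, vsub; ring).
  apply (Rle_trans _ _ _ (vnorm_add n _ _)). fold t. lra. }
assert (Heps : 0 <= theta * vnorm n s ^ 2) by (apply Rmult_le_pos; auto; apply pow_le, vnorm_ge0).
destruct (CondG_dist n C y x _ z xs HCconv HCx Hxs Heps HG) as [Hz Hzd].
split; [exact Hz|].
rewrite sqrt_mult, sqrt_pow2 in Hzd by (auto; try apply pow_le; apply vnorm_ge0).
replace (vsub y xs) with (vadd d s) in Hzd
  by (rewrite Hy; apply functional_extensionality; intro i; unfold d, vadd, vsub; ring).
pose proof (sqrt_pos theta). pose proof (opnorm_ge0 n (mm n (mat_inv n M) (DF x))).
assert (sqrt theta * vnorm n s <= sqrt theta * (w1 * (1 + th) * (f t / df t))).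
{ apply Rmult_le_compat_l; auto. apply (Rle_trans _ _ _ Hsn). apply Rmult_le_compat_l; nra. }
assert (w1 * (1 + th) * vnorm n (vsub (mv n Di (F x)) d) <= w1 * (1 + th) * (f t / df t - t))
  by (apply Rmult_le_compat_l; nra).
fold t in Hyn. lra.
Qed.
End OneStep.

(** * The error recursion *)

Lemma sqrt_plus_sq_le a b : 0 <= b -> sqrt (a + b * b) <= sqrt a + b.
Proof.
intros Hb. destruct (Rle_or_lt 0 a) as [Ha|Ha].
- pose proof (sqrt_pos a). pose proof (sqrt_sqrt a Ha).
  rewrite <- (sqrt_pow2 (sqrt a + b)) by lra. apply sqrt_le_1_alt. simpl.
  assert (0 <= sqrt a * b) by (apply Rmult_le_pos; lra). nra.
- rewrite (sqrt_neg_0 a) by lra. rewrite Rplus_0_l.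
  destruct (Rle_or_lt 0 (a + b * b)).
  + apply (Rle_trans _ (sqrt (b * b))); [apply sqrt_le_1_alt; lra|rewrite sqrt_square; lra].
  + rewrite sqrt_neg_0 by lra. lra.
Qed.

Lemma Rpower_div a b z : 0 < a -> 0 < b -> Rpower (a / b) z = Rpower a z / Rpower b z.
Proof.
intros Ha Hb. unfold Rpower, Rdiv.
rewrite ln_mult, ln_Rinv by (try apply Rinv_0_lt_compat; lra).
replace (z * (ln a + - ln b)) with (z * ln a + - (z * ln b)) by ring.
rewrite exp_plus, exp_Ropp. reflexivity.
Qed.

(* The scalar recursion satisfied by the errors [T k = |x_k - xs|]. *)
Section MajorantSequence.
Context {f df : R -> R} {Rr w1 w2 th lam t0 : R} {theta T : nat -> R}.
Hypothesis HR : Rr > 0.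
Hypothesis Hf : C1_interval f df 0 Rr.
Hypothesis Hh1 : f 0 = 0 /\ df 0 = -1.
Hypothesis Hh2 : forall a b, 0 <= a -> a < b -> b < Rr -> df a < df b.
Hypothesis Hth : 0 <= th < 1.
Hypothesis Hw : 0 <= w2 < w1.
Hypothesis Hlam : 0 <= lam < (1 - w2 - w1 * th) / (w1 * (1 + th)).
Hypothesis Htheta : forall k, 0 <= theta k <= lam ^ 2 / 2.
Hypothesis HT0 : T O = t0.
Hypothesis Ht0 : t0 < rho f df Rr w1 w2 th lam.
Hypothesis Hpos : forall k, 0 < T k.
Hypothesis Hstep : forall k, T k <= t0 ->
  T (S k) <= w1 * (1 + th) * (f (T k) / df (T k) - T k) + (w1 * th + w2) * T k
             + sqrt (theta k) * (w1 * (1 + th) * (f (T k) / df (T k))).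

Let K := w1 * (1 + th) * (1 + lam).
Let c := w1 * ((1 + th) * lam + th) + w2.
Let gap t := f t / df t - t.

Lemma t0_lt_nu : t0 < nu df Rr.
Proof.
destruct (rho_approx f df Rr HR Hf Hh1 w1 w2 th lam Hth Hw Hlam t0 Ht0) as [d [Hd [[_ Hdnu] _]]].
lra.
Qed.

Lemma gain_lt1 t : 0 < t <= t0 -> K * (f t / (t * df t) - 1) + c < 1.
Proof.
intros Ht.
destruct (rho_approx f df Rr HR Hf Hh1 w1 w2 th lam Hth Hw Hlam t0 Ht0) as [d [Hd [_ Hadm]]].
specialize (Hadm t ltac:(lra)). unfold K, c. lra.
Qed.

Lemma gap_props t : 0 < t <= t0 -> df t < 0 /\ 0 <= gap t /\ gap t = t * (f t / (t * df t) - 1).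
Proof.
intros Ht. pose proof t0_lt_nu. pose proof (nu_le f df Rr HR Hh1).
assert (Hneg : df t < 0) by (apply (df_neg f df Rr); try assumption; lra).
split; [exact Hneg|]. split.
- apply (newton_gap_nonneg f df Rr Hf Hh1 Hh2); lra.
- unfold gap. field. lra.
Qed.

Lemma sqrt_theta_le k : sqrt (theta k) <= lam.
Proof.
destruct (Htheta k). destruct Hlam.
rewrite <- (sqrt_pow2 lam) by lra. apply sqrt_le_1_alt. simpl. nra.
Qed.

Lemma seq_step k : T k <= t0 ->
  T (S k) <= w1 * (1 + th) * (1 + sqrt (theta k)) * gap (T k)
             + (w1 * th + w2 + sqrt (theta k) * (w1 * (1 + th))) * T k.
Proof. intros Hk. specialize (Hstep k Hk). unfold gap. lra. Qed.

Lemma seq_contraction k : T k <= t0 -> T (S k) <= K * gap (T k) + c * T k.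
Proof.
intros Hk. pose proof (seq_step k Hk). pose proof (sqrt_theta_le k). pose proof (sqrt_pos (theta k)).
destruct (gap_props (T k) ltac:(split; [apply Hpos|exact Hk])) as [_ [Hg _]].
assert (w1 * (1 + th) * (1 + sqrt (theta k)) * gap (T k) <= K * gap (T k))
  by (apply Rmult_le_compat_r; [exact Hg|]; unfold K; apply Rmult_le_compat_l; nra).
assert (sqrt (theta k) * (w1 * (1 + th)) * T k <= lam * (w1 * (1 + th)) * T k)
  by (apply Rmult_le_compat_r; [left; apply Hpos|]; apply Rmult_le_compat_r; nra).
unfold c. nra.
Qed.

Lemma seq_decrease k : T k <= t0 -> T (S k) < T k.
Proof.
intros Hk. pose proof (Hpos k).
destruct (gap_props (T k) ltac:(lra)) as [_ [_ Hg]].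
pose proof (gain_lt1 (T k) ltac:(lra)).
pose proof (seq_contraction k Hk). rewrite Hg in *.
assert (T k * (K * (f (T k) / (T k * df (T k)) - 1) + c) < T k * 1)
  by (apply Rmult_lt_compat_l; lra).
lra.
Qed.

Lemma seq_le_t0 k : T k <= t0.
Proof.
induction k as [|k IH]; [lra|]. pose proof (seq_decrease k IH). lra.
Qed.

Lemma seq_cv0 : Un_cv T 0.
Proof.
assert (Hdec : Un_decreasing T) by (intros k; left; apply seq_decrease, seq_le_t0).
destruct (decreasing_cv T Hdec) as [L HL].
{ exists 0. intros y [i ->]. unfold opp_seq. pose proof (Hpos i). lra. }
assert (HLle := decreasing_ineq T L Hdec HL).
assert (HL0 : 0 <= L).
{ apply Rnot_lt_le. intros HLn. destruct (HL (- L) ltac:(lra)) as [N HN].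
  specialize (HN N (le_n N)). unfold R_dist in HN. apply Rabs_def2 in HN.
  pose proof (Hpos N). lra. }
destruct (Req_dec L 0) as [->|HLn0]; [exact HL|]. exfalso.
(* a positive limit L would satisfy L <= K gap(L) + c L = L * gain(L) < L *)
assert (HLt : 0 < L <= t0) by (pose proof (HLle O); lra).
destruct (gap_props L HLt) as [HLneg [_ HgL]].
pose proof (gain_lt1 L HLt) as HGL. pose proof t0_lt_nu. pose proof (nu_le f df Rr HR Hh1).
assert (Hcv : Un_cv (fun k => K * gap (T k) + c * T k) (K * gap L + c * L)).
{ apply CV_plus; apply CV_mult; try (intros e He; exists O; intros; unfold R_dist; rewrite Rminus_diag, Rabs_R0; lra).
  - apply (continuity_seq (fun t => f t / df t - t)); [|exact HL].
    apply (newton_gap_continuity_pt f df Rr Hf); lra.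
  - exact HL. }
assert (Hlt : K * gap L + c * L < L).
{ rewrite HgL. assert (L * (K * (f L / (L * df L) - 1) + c) < L * 1) by (apply Rmult_lt_compat_l; lra).
  lra. }
destruct (Hcv (L - (K * gap L + c * L)) ltac:(lra)) as [N HN].
specialize (HN N (le_n N)). unfold R_dist in HN. apply Rabs_def2 in HN.
pose proof (seq_contraction N (seq_le_t0 N)). pose proof (HLle (S N)). lra.
Qed.

Lemma seq_ratio_bound k :
  T (S k) / T k <= K * (f (T k) / (T k * df (T k)) - 1) + (w1 * th + w2)
                   + sqrt (theta k) * (w1 * (1 + th)).
Proof.
pose proof (Hpos k) as Hk. pose proof (seq_le_t0 k) as Hkt.
destruct (gap_props (T k) ltac:(lra)) as [_ [Hg Hgr]].
pose proof (seq_step k Hkt). pose proof (sqrt_theta_le k). pose proof (sqrt_pos (theta k)).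
set (q := f (T k) / (T k * df (T k)) - 1) in *.
assert (Hq : 0 <= q) by (rewrite Hgr in Hg; nra).
assert (w1 * (1 + th) * (1 + sqrt (theta k)) * q <= K * q)
  by (apply Rmult_le_compat_r; [exact Hq|]; unfold K; apply Rmult_le_compat_l; nra).
apply (Rmult_le_reg_r (T k)); [exact Hk|].
unfold Rdiv. rewrite Rmult_assoc, Rinv_l, Rmult_1_r by lra.
rewrite Hgr in *. nra.
Qed.

Lemma seq_ratio_limsup thtil : is_limsup theta thtil -> forall e, e > 0 ->
  exists N, forall k, (N <= k)%nat ->
    T (S k) / T k <= w1 * ((1 + th) * sqrt (2 * thtil) + th) + w2 + e.
Proof.
intros Hls e He.
assert (HK : 0 < K) by (unfold K; destruct Hlam; apply Rmult_lt_0_compat; [apply Rmult_lt_0_compat|]; lra).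
assert (Hw1 : 0 < w1 * (1 + th)) by (apply Rmult_lt_0_compat; lra).
set (e1 := e / (2 * K)). set (e2 := e / (2 * (w1 * (1 + th)))).
assert (He1 : K * e1 = e / 2) by (unfold e1; field; lra).
assert (He2 : e2 * (w1 * (1 + th)) = e / 2) by (unfold e2; field; lra).
assert (He2p : 0 < e2) by (unfold e2; apply Rdiv_lt_0_compat; lra).
destruct (newton_ratio_near0 f df Rr HR Hf Hh1 e1) as [d1 [Hd1 Hnear]];
  [unfold e1; apply Rdiv_lt_0_compat; lra|].
destruct (seq_cv0 d1 ltac:(lra)) as [N1 HN1].
destruct (Hls (e2 * e2) ltac:(nra)) as [[N2 HN2] _].
exists (N1 + N2)%nat. intros k Hk.
specialize (HN1 k ltac:(lia)). unfold R_dist in HN1. rewrite Rminus_0_r, Rabs_right in HN1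
  by (left; apply Hpos).
destruct (Hnear (T k) ltac:(split; [apply Hpos|exact HN1])) as [_ Hr].
assert (Hsq : sqrt (theta k) <= sqrt (2 * thtil) + e2).
{ specialize (HN2 k ltac:(lia)).
  apply (Rle_trans _ (sqrt (thtil + e2 * e2))); [apply sqrt_le_1_alt; lra|].
  apply (Rle_trans _ (sqrt thtil + e2)); [apply sqrt_plus_sq_le; lra|].
  assert (sqrt thtil <= sqrt (2 * thtil)).
  { destruct (Rle_or_lt 0 thtil); [apply sqrt_le_1_alt; lra|rewrite !sqrt_neg_0 by lra; lra]. }
  lra. }
pose proof (seq_ratio_bound k).
assert (K * (f (T k) / (T k * df (T k)) - 1) <= K * e1) by (apply Rmult_le_compat_l; lra).
assert (sqrt (theta k) * (w1 * (1 + th)) <= (sqrt (2 * thtil) + e2) * (w1 * (1 + th)))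
  by (apply Rmult_le_compat_r; lra).
lra.
Qed.

Lemma seq_rate p : 0 < p <= 1 ->
  (forall a b, 0 < a -> a < b -> b < nu df Rr ->
     (f a / df a - a) / Rpower a (p + 1) < (f b / df b - b) / Rpower b (p + 1)) ->
  forall k, T (S k) <= K * (f t0 / df t0 - t0) * Rpower (T k / t0) (p + 1) + c * T k.
Proof.
intros Hp Hh3 k. pose proof (Hpos k) as Hk. pose proof (seq_le_t0 k) as Hkt.
pose proof t0_lt_nu. assert (Ht0p : 0 < t0) by lra.
pose proof (seq_contraction k Hkt).
assert (Hgap : gap (T k) <= gap t0 * Rpower (T k / t0) (p + 1)).
{ rewrite Rpower_div by lra.
  assert (Hpk : 0 < Rpower (T k) (p + 1)) by apply exp_pos.
  assert (Hp0 : 0 < Rpower t0 (p + 1)) by apply exp_pos.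
  assert (Hle : gap (T k) / Rpower (T k) (p + 1) <= gap t0 / Rpower t0 (p + 1)).
  { destruct (Req_dec (T k) t0) as [->|Hne]; [lra|]. left. apply Hh3; lra. }
  apply (Rmult_le_compat_r (Rpower (T k) (p + 1))) in Hle; [|lra].
  unfold Rdiv in *. rewrite Rmult_assoc, Rinv_l, Rmult_1_r in Hle by lra. lra. }
assert (K * gap (T k) <= K * (gap t0 * Rpower (T k / t0) (p + 1)))
  by (apply Rmult_le_compat_l; [unfold K; destruct Hlam; apply Rmult_le_pos; [apply Rmult_le_pos|]; lra|exact Hgap]).
unfold gap in *. lra.
Qed.

Lemma majorant_sequence_props :
  (forall k, T k <= t0) /\ (forall k, T (S k) < T k) /\ Un_cv T 0 /\
  (forall thtil, is_limsup theta thtil -> forall e, e > 0 ->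
     exists N, forall k, (N <= k)%nat ->
       T (S k) / T k <= w1 * ((1 + th) * sqrt (2 * thtil) + th) + w2 + e) /\
  (forall p, 0 < p <= 1 ->
     (forall a b, 0 < a -> a < b -> b < nu df Rr ->
        (f a / df a - a) / Rpower a (p + 1) < (f b / df b - b) / Rpower b (p + 1)) ->
     forall k, T (S k) <= K * (f t0 / df t0 - t0) * Rpower (T k / t0) (p + 1) + c * T k).
Proof.
split; [exact seq_le_t0|]. split; [intros k; apply seq_decrease, seq_le_t0|].
split; [exact seq_cv0|]. split; [exact seq_ratio_limsup|exact seq_rate].
Qed.

End MajorantSequence.

(* [vnorm (z - xs) = 0] only makes [z] and [xs] agree on the first [n] coordinates, which [F]
   could a priori distinguish; differentiability at [xs] rules that out. *)
Lemma C1_map_veq_root n Om F DF xs z : C1_map n Om F DF -> Om xs -> Om z ->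
  veq n (F xs) vzero -> vnorm n (vsub z xs) = 0 -> veq n (F z) vzero.
Proof.
intros [HF _] Hxs Hz HFxs H0.
destruct (HF xs Hxs 1 ltac:(lra)) as [d [Hd H]].
assert (Hzz : vadd xs (vsub z xs) = z)
  by (apply functional_extensionality; intro i; unfold vadd, vsub; ring).
specialize (H (vsub z xs) ltac:(lra) ltac:(rewrite Hzz; exact Hz)).
rewrite Hzz, H0, Rmult_0_r in H.
assert (Hn : vnorm n (vsub (vsub (F z) (F xs)) (mv n (DF xs) (vsub z xs))) = 0)
  by (pose proof (vnorm_ge0 n (vsub (vsub (F z) (F xs)) (mv n (DF xs) (vsub z xs)))); lra).
apply vnorm_eq0 in Hn. apply vnorm_eq0 in H0.
intros i Hi. specialize (Hn i Hi).
assert (Hm : mv n (DF xs) (vsub z xs) i = 0)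
  by (rewrite (mv_veq n (DF xs) _ _ H0); apply (mv_vzero n (DF xs) i Hi)).
change (F z i - F xs i - mv n (DF xs) (vsub z xs) i = 0) in Hn.
rewrite Hm, (HFxs i Hi) in Hn. unfold vzero in *. lra.
Qed.

Lemma INL_CondG_in_C n C F x0 theta M s r y x :
  is_convex C -> C x0 -> (forall k, 0 <= theta k) ->
  INL_CondG n C F x0 theta M s r y x -> forall k, C (x k).
Proof.
intros Hconv Hx0 Htheta [Hstart Hit] k. induction k as [|k IH]; [rewrite Hstart; exact Hx0|].
destruct (Hit k) as [_ [_ [_ [_ HG]]]].
apply (CondG_spec n C (y k) (x k) (theta k * vnorm n (s k) ^ 2) _ Hconv IH); [|exact HG].
apply Rmult_le_pos; [apply Htheta|apply pow_le, vnorm_ge0].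
Qed.

Theorem theorem1
  (n : nat) (Om : vec -> Prop) (F : vec -> vec) (DF : vec -> mat)
  (C : vec -> Prop) (xs : vec) (Rr : R) (f df : R -> R)
  (th w1 w2 lam : R)
  (x0 : vec) (theta : nat -> R) (M : nat -> mat) (s r y x : nat -> vec)
  (P : nat -> mat) (eta : nat -> R)
  (HOm : is_open n Om)
  (HF : C1_map n Om F DF)
  (HCne : exists c, C c) (HCconv : is_convex C) (HCcomp : is_compact n C)
  (HCOm : forall z, C z -> Om z)
  (Hxs : C xs) (HFxs : veq n (F xs) vzero) (HDFxs : invertible n (DF xs))
  (HR : Rr > 0)
  (Hf : C1_interval f df 0 Rr)
  (Hmaj : forall tau z, 0 <= tau <= 1 -> ball n xs (kappa n Om xs Rr) z ->
     opnorm n (mm n (mat_inv n (DF xs))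
                 (msub (DF z) (DF (vadd xs (vscal tau (vsub z xs))))))
     <= df (vnorm n (vsub z xs)) - df (tau * vnorm n (vsub z xs)))
  (Hh1 : f 0 = 0 /\ df 0 = -1)
  (Hh2 : forall a b, 0 <= a -> a < b -> b < Rr -> df a < df b)
  (Hth : 0 <= th < 1) (Hw : 0 <= w2 < w1) (Hw1 : w1 * th + w2 < 1)
  (Hlam : 0 <= lam < (1 - w2 - w1 * th) / (w1 * (1 + th)))
  (Hx0C : C x0)
  (Hx0b : ball n xs (Rmin (kappa n Om xs Rr) (rho f df Rr w1 w2 th lam)) x0)
  (Hx0ne : ~ veq n x0 xs)
  (Htheta : forall k, 0 <= theta k <= lam ^ 2 / 2)
  (Hit : INL_CondG n C F x0 theta M s r y x)
  (HM1 : forall k, opnorm n (mm n (mat_inv n (M k)) (DF (x k))) <= w1)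
  (HM2 : forall k, opnorm n (msub (mm n (mat_inv n (M k)) (DF (x k))) idm) <= w2)
  (HP : forall k, invertible n (P k))
  (Hr : forall k, vnorm n (mv n (P k) (r k)) <= eta k * vnorm n (mv n (P k) (F (x k))))
  (Heta : forall k, 0 <= eta k * cond n (mm n (P k) (DF (x k))) <= th) :
  let sigma := Rmin (kappa n Om xs Rr) (rho f df Rr w1 w2 th lam) in
  (forall k, ball n xs sigma (x k) /\ C (x k)) /\
  Un_cv (fun k => vnorm n (vsub (x k) xs)) 0 /\
  (forall k, vnorm n (vsub (x (S k)) xs) < vnorm n (vsub (x k) xs)) /\
  (forall thtil, is_limsup theta thtil ->
     forall e, e > 0 -> exists N, forall k, (N <= k)%nat ->
       vnorm n (vsub (x (S k)) xs) / vnorm n (vsub (x k) xs)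
       <= w1 * ((1 + th) * sqrt (2 * thtil) + th) + w2 + e) /\
  (forall p, 0 < p <= 1 ->
     (forall a b, 0 < a -> a < b -> b < nu df Rr ->
        (f a / df a - a) / Rpower a (p + 1) < (f b / df b - b) / Rpower b (p + 1)) ->
     forall k,
       vnorm n (vsub (x (S k)) xs) <=
         w1 * (1 + th) * (1 + lam)
           * (f (vnorm n (vsub x0 xs)) / df (vnorm n (vsub x0 xs)) - vnorm n (vsub x0 xs))
           * Rpower (vnorm n (vsub (x k) xs) / vnorm n (vsub x0 xs)) (p + 1)
         + (w1 * ((1 + th) * lam + th) + w2) * vnorm n (vsub (x k) xs)).
Proof.
intros sigma. set (T := fun k => vnorm n (vsub (x k) xs)). set (t0 := vnorm n (vsub x0 xs)).
assert (Ht0 : t0 < kappa n Om xs Rr /\ t0 < rho f df Rr w1 w2 th lam)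
  by (pose proof (Rmin_l (kappa n Om xs Rr) (rho f df Rr w1 w2 th lam));
      pose proof (Rmin_r (kappa n Om xs Rr) (rho f df Rr w1 w2 th lam)); unfold ball in Hx0b; fold t0 in Hx0b; lra).
pose proof (rho_le_nu f df Rr HR Hf Hh1 w1 w2 th lam Hth Hw Hlam).
assert (HC : forall k, C (x k)) by (apply (INL_CondG_in_C n C F x0 theta M s r y x); auto; apply Htheta).
assert (HT0 : T O = t0) by (unfold T; rewrite (proj1 Hit); reflexivity).
(* [F (x k) <> 0] already separates every iterate from [xs] *)
assert (Hpos : forall k, 0 < T k).
{ intros k. destruct (Rle_lt_or_eq_dec 0 (T k) (vnorm_ge0 n _)) as [|H0]; [assumption|exfalso].
  apply (proj1 (proj2 Hit k)), (C1_map_veq_root n Om F DF xs); auto. }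
assert (Hstep : forall k, T k <= t0 ->
  T (S k) <= w1 * (1 + th) * (f (T k) / df (T k) - T k) + (w1 * th + w2) * T k
             + sqrt (theta k) * (w1 * (1 + th) * (f (T k) / df (T k)))).
{ intros k Hk. destruct (proj2 Hit k) as [_ [HMk [Hsk [Hyk HGk]]]].
  apply (inl_condg_step n Om F DF C xs Rr f df HR HF Hf Hh1 Hh2 HDFxs Hmaj HFxs Hxs HCconv
           th w1 w2 (x k) (M k) (s k) (r k) (y k) (x (S k)) (P k) (eta k) (theta k));
    auto; try (unfold ball; fold (T k); lra); try apply Htheta.
  - assert (0 <= w1 * th) by (apply Rmult_le_pos; lra). lra.
  - apply (df_neg f df Rr HR Hh1 Hh2). split; [apply vnorm_ge0|fold (T k); lra]. }
destruct (majorant_sequence_props HR Hf Hh1 Hh2 Hth Hw Hlam Htheta HT0 (proj2 Ht0) Hpos Hstep)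
  as [Hle [Hdec [Hcv [Hlimsup Hrate]]]].
split; [|split; [exact Hcv|split; [exact Hdec|split; [exact Hlimsup|exact Hrate]]]].
intros k. split; [|apply HC]. unfold ball, sigma. fold (T k).
pose proof (Hle k). unfold ball in Hx0b. fold t0 in Hx0b. lra.
Qed.
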